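(* Let $u$ be a smooth solution of the problem below on $[0,T)$ with smooth initial data $u_0$, under either periodic or Dirichlet boundary conditions. Then for all $t\in[0,T)$ and $\alpha\in[0,1]$, with $\eta(t)$ the solution of $\dot\eta(t)=\bar{\mathcal K}_0(t)^{-2}$, $\eta(0)=0$, one has $\mathcal J(\alpha,t)>0$, $$\gamma_\alpha(\alpha,t)=\frac{\mathcal K_0(\alpha,t)}{\bar{\mathcal K}_0(t)},$$ and $$u_x(\gamma(\alpha,t),t)=\frac{1}{\eta(t)\,\bar{\mathcal K}_0(t)^2}\left(\frac{1}{\mathcal J(\alpha,t)}-\frac{\bar{\mathcal K}_1(t)}{\bar{\mathcal K}_0(t)}\right)$$ (for $t>0$).
   Context: The problem: $u_{xt}+u u_{xx}-u_x^2=-2\int_0^1 u_x^2\,dx$ for $t>0$, $x\in[0,1]$, $u(x,0)=u_0(x)$, with either periodic boundary conditions $u(0,t)=u(1,t)$, $u_x(0,t)=u_x(1,t)$ or Dirichlet boundary conditions $u(0,t)=u(1,t)=0$. The Lagrangian flow $\gamma(\alpha,t)$ is defined by $\dot\gamma(\alpha,t)=u(\gamma(\alpha,t),t)$, $\gamma(\alpha,0)=\alpha$, and $\gamma_\alpha=\partial\gamma/\partial\alpha$. Given the function $\eta(t)$, define $\mathcal J(\alpha,t)=1-\eta(t)u_0'(\alpha)$, $\mathcal K_i(\alpha,t)=\mathcal J(\alpha,t)^{-(i+1)}$ and $\bar{\mathcal K}_i(t)=\int_0^1\mathcal K_i(\alpha,t)\,d\alpha$ for $i=0,1$. *)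

From Stdlib Require Import Reals Lra Classical ClassicalEpsilon.
Open Scope R_scope.

(* Riemann integral of f over [a,b]; 0 if f is not Riemann integrable
   (the value is independent of the integrability proof, RiemannInt_P5). *)
Definition RInt (f : R -> R) (a b : R) : R :=
  match excluded_middle_informative (exists pr : Riemann_integrable f a b, True) with
  | left H => RiemannInt (proj1_sig (constructive_indefinite_description _ H))
  | right _ => 0
  end.

Definition cont2_on (S : R -> R -> Prop) (f : R -> R -> R) : Prop :=
  forall x t, S x t -> forall eps, 0 < eps -> exists d, 0 < d /\
    forall x' t', Rabs (x' - x) < d -> Rabs (t' - t) < d ->
      Rabs (f x' t' - f x t) < eps.

Definition is_dx_on (S : R -> R -> Prop) (f g : R -> R -> R) : Prop :=
  forall x t, S x t -> derivable_pt_lim (fun y => f y t) x (g x t).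

Definition is_dt_on (S : R -> R -> Prop) (f g : R -> R -> R) : Prop :=
  forall x t, S x t -> derivable_pt_lim (fun s => f x s) t (g x t).

(* C^infinity on (an open set) S: continuous, and both first-order partial
   derivatives exist on S and are again C^infinity on S. *)
CoInductive smooth_on (S : R -> R -> Prop) (f : R -> R -> R) : Prop :=
  | smooth_intro :
      cont2_on S f ->
      (exists fx, is_dx_on S f fx /\ smooth_on S fx) ->
      (exists ft, is_dt_on S f ft /\ smooth_on S ft) ->
      smooth_on S f.

Definition strip (delta T : R) : R -> R -> Prop := fun _ t => - delta < t < T.

Definition J (u0' eta : R -> R) (alpha t : R) : R := 1 - eta t * u0' alpha.

Definition K (i : nat) (u0' eta : R -> R) (alpha t : R) : R :=
  / (J u0' eta alpha t ^ (i + 1)).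

Definition Kbar (i : nat) (u0' eta : R -> R) (t : R) : R :=
  RInt (fun a => K i u0' eta a t) 0 1.

From Pilot Require Import Defs.
From Stdlib Require Import Reals Lra Lia Psatz ZArith Classical ClassicalEpsilon FunctionalExtensionality.
From Coquelicot Require Import Coquelicot.
Open Scope R_scope.

(* Let gamma be the Lagrangian flow and jacinv a t = 1 / gamma_a(a, t)
   = exp (- \int_0^t ux (gamma a s) s ds). Along trajectories the equation
   turns the Riccati equation for ux into the linear equation
   jacinv'' = - I(t) jacinv, with I(t) = -2 \int_0^1 ux^2 independent of a.
   Since u0(0) = u0(1) there is a0 with u0'(a0) = 0, and reduction of order
   gives jacinv a t = jacinv a0 t * (1 - psi t * u0'(a)) = jacinv a0 t * J
   with psi' = jacinv a0 ^ -2. The boundary conditions give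
   gamma(1, t) - gamma(0, t) = 1 and u(gamma(1, t), t) = u(gamma(0, t), t);
   integrating gamma_a and d/da u(gamma(a, t), t) over [0, 1] yields
   jacinv a0 = Kbar_0(psi) and jacinv_dot a0 in terms of Kbar_0 and Kbar_1.
   So psi, like eta, solves psi' = Kbar_0(psi)^-2 with psi(0) = 0, and a local
   Lipschitz estimate gives eta = psi, from which all formulas follow. *)

Lemma continuous_induction (a b : R) (Q : R -> Prop) : a <= b ->
  (forall s, a <= s <= b -> (forall r, a <= r < s -> Q r) ->
     exists d, 0 < d /\ forall r, s <= r < s + d -> r <= b -> Q r) ->
  forall r, a <= r <= b -> Q r.
Proof.
  intros Hab Hstep.
  set (E := fun s => a <= s <= b /\ forall r, a <= r < s -> Q r).
  assert (HE : exists x, E x) by (exists a; split; [lra | intros; lra]).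
  assert (Hb : bound E) by (exists b; intros x [Hx _]; lra).
  destruct (completeness E Hb HE) as [m [Hub Hlub]].
  assert (Ham : a <= m) by (apply Hub; split; [lra | intros; lra]).
  assert (Hmb : m <= b) by (apply Hlub; intros x [Hx _]; lra).
  assert (Hbelow : forall r, a <= r < m -> Q r).
  { intros r Hr. destruct (classic (Q r)) as [| HnQ]; [auto |].
    exfalso. assert (m <= r); [| lra]. apply Hlub. intros x [Hx Hx2].
    destruct (Rle_or_lt x r); auto. exfalso; apply HnQ, Hx2; lra. }
  destruct (Hstep m (conj Ham Hmb) Hbelow) as [d [Hd Hq]].
  assert (Hm : m = b).
  { destruct (Req_dec m b) as [| Hne]; auto. exfalso.
    assert (HE' : E (Rmin (m + d / 2) b)).
    { split; [split; [apply Rmin_case; lra | apply Rmin_r] |].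
      intros r Hr. destruct (Rlt_or_le r m); [apply Hbelow; lra |].
      assert (Rmin (m + d / 2) b <= m + d / 2) by apply Rmin_l.
      assert (Rmin (m + d / 2) b <= b) by apply Rmin_r.
      apply Hq; lra. }
    apply Hub in HE'. revert HE'. apply Rmin_case; lra. }
  intros r Hr. destruct (Rlt_or_le r m); [apply Hbelow | apply Hq]; lra.
Qed.

Lemma mvt_open (f df : R -> R) (a b : R) : a < b ->
  (forall c, a < c < b -> derivable_pt_lim f c (df c)) ->
  (forall c, a <= c <= b -> continuity_pt f c) ->
  exists c, a < c < b /\ f b - f a = df c * (b - a).
Proof.
  intros Hab Hd Hc.
  assert (pr1 : forall c, a < c < b -> derivable_pt f c)
    by (intros c Hc'; exists (df c); apply Hd; auto).
  assert (pr2 : forall c, a < c < b -> derivable_pt id c)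
    by (intros c _; apply derivable_pt_id).
  destruct (MVT f id a b pr1 pr2 Hab Hc) as [c [P HP]].
  { intros; apply derivable_continuous_pt, derivable_pt_id. }
  exists c; split; auto.
  rewrite (derive_pt_eq_0 _ _ _ (pr1 c P) (Hd c P)) in HP.
  rewrite (derive_pt_eq_0 _ _ _ (pr2 c P) (derivable_pt_lim_id c)) in HP.
  unfold id in HP. lra.
Qed.

Lemma mvt_segment (g dg : R -> R) (a b : R) :
  (forall z, Rmin a b <= z <= Rmax a b -> derivable_pt_lim g z (dg z)) ->
  exists z, Rmin a b <= z <= Rmax a b /\ g b - g a = dg z * (b - a).
Proof.
  intros Hd.
  assert (Hcont : forall z, Rmin a b <= z <= Rmax a b -> continuity_pt g z)
    by (intros z Hz; apply derivable_continuous_pt; exists (dg z); apply Hd; auto).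
  destruct (Rtotal_order a b) as [Hab | [Hab | Hab]].
  - rewrite Rmin_left, Rmax_right in *; try lra.
    destruct (mvt_open g dg a b Hab) as [c [Hc1 Hc2]];
      [intros; apply Hd; lra | auto |].
    exists c; split; [lra | auto].
  - subst. exists b. split; [split; [apply Rmin_l | apply Rmax_l] | ring].
  - rewrite Rmin_right, Rmax_left in *; try lra.
    destruct (mvt_open g dg b a Hab) as [c [Hc1 Hc2]];
      [intros; apply Hd; lra | auto |].
    exists c; split; [lra | lra].
Qed.

Lemma Rabs_segment (z a b : R) :
  Rmin a b <= z <= Rmax a b -> Rabs (z - a) <= Rabs (b - a).
Proof.
  apply Rmin_case_strong; apply Rmax_case_strong; intros;
    unfold Rabs; repeat destruct Rcase_abs; lra.
Qed.

Lemma nonincreasing_of_deriv_nonpos (f df : R -> R) (a b : R) : a <= b ->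
  (forall c, a < c < b -> derivable_pt_lim f c (df c)) ->
  (forall c, a <= c <= b -> continuity_pt f c) ->
  (forall c, a < c < b -> df c <= 0) -> f b <= f a.
Proof.
  intros Hab Hd Hc Hn. destruct (Req_dec a b); [subst; lra |].
  destruct (mvt_open f df a b) as [c [Hc1 Hc2]]; try lra; auto.
  specialize (Hn c Hc1). nra.
Qed.

Lemma constant_of_deriv_zero (f : R -> R) (a b : R) : a <= b ->
  (forall c, a < c < b -> derivable_pt_lim f c 0) ->
  (forall c, a <= c <= b -> continuity_pt f c) -> f b = f a.
Proof.
  intros Hab Hd Hc. destruct (Req_dec a b); [subst; lra |].
  destruct (mvt_open f (fun _ => 0) a b) as [c [Hc1 Hc2]]; try lra; auto.
Qed.

Lemma le_of_le_on_left (g : R -> R) (s d0 c : R) : 0 < d0 -> continuity_pt g s ->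
  (forall r, s - d0 < r < s -> g r <= c) -> g s <= c.
Proof.
  intros Hd0 Hg Hle. apply Rnot_lt_le. intro Hc.
  destruct (Hg (g s - c)) as [d [Hd Hclose]]; [lra |].
  set (r := s - Rmin d0 d / 2).
  assert (0 < Rmin d0 d) by (apply Rmin_case; lra).
  assert (Rmin d0 d <= d0) by apply Rmin_l. assert (Rmin d0 d <= d) by apply Rmin_r.
  assert (Hr : Rabs (g r - g s) < g s - c).
  { apply Hclose. split; [split; [exact I | unfold r; lra] |].
    simpl; unfold R_dist, r. rewrite Rabs_left; lra. }
  specialize (Hle r ltac:(unfold r; lra)). apply Rabs_def2 in Hr. lra.
Qed.

Lemma derivable_pt_lim_ext_loc (f g : R -> R) (x d l : R) : 0 < d ->
  (forall y, Rabs (y - x) < d -> f y = g y) ->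
  derivable_pt_lim f x l -> derivable_pt_lim g x l.
Proof.
  intros Hd Heq Hf. apply is_derive_Reals. apply (is_derive_ext_loc f).
  - exists (mkposreal d Hd). intros y Hy. apply Heq. exact Hy.
  - apply is_derive_Reals; auto.
Qed.

Lemma continuity_pt_ext_loc (f g : R -> R) (x d : R) : 0 < d ->
  (forall y, Rabs (y - x) < d -> f y = g y) ->
  continuity_pt f x -> continuity_pt g x.
Proof.
  intros Hd Heq Hf eps Heps. destruct (Hf eps Heps) as [d1 [Hd1 H1]].
  exists (Rmin d d1). split; [apply Rmin_case; lra |].
  intros y [Hy1 Hy2]. simpl in *. unfold R_dist in *.
  assert (Rmin d d1 <= d) by apply Rmin_l. assert (Rmin d d1 <= d1) by apply Rmin_r.
  rewrite <- !Heq by (try rewrite Rminus_diag, Rabs_R0; lra).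
  apply H1. split; auto. lra.
Qed.

Lemma derivable_pt_lim_eq (f : R -> R) (x l1 l2 : R) :
  derivable_pt_lim f x l1 -> l1 = l2 -> derivable_pt_lim f x l2.
Proof. intros; subst; auto. Qed.

Lemma Rmax0_lipschitz (a b : R) : Rabs (Rmax 0 a - Rmax 0 b) <= Rabs (a - b).
Proof. unfold Rmax; repeat destruct Rle_dec; unfold Rabs; repeat destruct Rcase_abs; lra. Qed.

Lemma Rmax0_continuous (s : R) : continuity_pt (Rmax 0) s.
Proof.
  intros eps Heps. exists eps. split; auto. intros x [_ Hx]. simpl in *. unfold R_dist in *.
  eapply Rle_lt_trans; [apply Rmax0_lipschitz | auto].
Qed.

Lemma exp_le_compat (x y : R) : x <= y -> exp x <= exp y.
Proof. intros [H | ->]; [left; apply exp_increasing; auto | right; auto]. Qed.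

Lemma periodic_derivative (f : R -> R) (l1 l2 x : R) : (forall y, f (y + 1) = f y) ->
  derivable_pt_lim f (x + 1) l1 -> derivable_pt_lim f x l2 -> l1 = l2.
Proof.
  intros Hp H1 H2. eapply uniqueness_limite; [| apply H2].
  apply derivable_pt_lim_eq with (l1 * (1 + 0)); [| ring].
  replace f with (fun y => f (y + 1)) at 1 by (apply functional_extensionality; auto).
  apply (derivable_pt_lim_comp (fun y => y + 1) f); [| auto].
  apply (derivable_pt_lim_plus id (fun _ => 1));
    [apply derivable_pt_lim_id | apply derivable_pt_lim_const].
Qed.

Lemma periodic_reduce (G : R -> R) : (forall y, G (y + 1) = G y) ->
  forall x, exists x0, 0 <= x0 <= 1 /\ G x = G x0.
Proof.
  intros HG x.
  assert (Hn : forall (n : nat) y, G (y + INR n) = G y).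
  { induction n as [| n IHn]; intros y; [simpl; rewrite Rplus_0_r; auto |].
    rewrite S_INR, <- Rplus_assoc, HG; auto. }
  destruct (base_Int_part x) as [H1 H2].
  set (k := Int_part x) in *. exists (x - IZR k). split; [lra |].
  destruct (Z_le_gt_dec 0 k) as [Hk | Hk].
  - rewrite <- (Z2Nat.id k), <- INR_IZR_INZ by auto.
    rewrite <- (Hn (Z.to_nat k) (x - INR (Z.to_nat k))). f_equal; ring.
  - assert (Ek : IZR k = - INR (Z.to_nat (- k)))
      by (rewrite INR_IZR_INZ, Z2Nat.id, opp_IZR by lia; ring).
    rewrite Ek, <- (Hn (Z.to_nat (- k)) x). f_equal; ring.
Qed.

Lemma continuous_of_continuity_pt (f : R -> R) (x : R) :
  continuity_pt f x -> continuous f x.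
Proof. intros H. apply continuity_pt_filterlim; auto. Qed.

Lemma ex_RInt_of_continuity (f : R -> R) (a b : R) :
  (forall z, Rmin a b <= z <= Rmax a b -> continuity_pt f z) -> ex_RInt f a b.
Proof.
  intros. apply (ex_RInt_continuous (V := R_CompleteNormedModule)).
  intros; apply continuous_of_continuity_pt; auto.
Qed.

Lemma RInt_point_R (f : R -> R) (a : R) : RInt f a a = 0.
Proof. exact (RInt_point (V := R_CompleteNormedModule) a f). Qed.

Lemma RInt_minus_R (f g : R -> R) (a b : R) : ex_RInt f a b -> ex_RInt g a b ->
  RInt (fun x => f x - g x) a b = RInt f a b - RInt g a b.
Proof. exact (RInt_minus (V := R_CompleteNormedModule) f g a b). Qed.

Lemma RInt_scal_R (f : R -> R) (c a b : R) : ex_RInt f a b ->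
  RInt (fun x => c * f x) a b = c * RInt f a b.
Proof. exact (RInt_scal (V := R_CompleteNormedModule) f a b c). Qed.

Lemma RInt_lincomb (f g : R -> R) (c1 c2 a b : R) : ex_RInt f a b -> ex_RInt g a b ->
  RInt (fun x => c1 * f x + c2 * g x) a b = c1 * RInt f a b + c2 * RInt g a b.
Proof.
  intros Hf Hg. rewrite <- (RInt_scal_R f c1), <- (RInt_scal_R g c2) by auto.
  exact (RInt_plus (V := R_CompleteNormedModule) (fun x => c1 * f x) (fun x => c2 * g x) a b
    (ex_RInt_scal (V := R_CompleteNormedModule) f a b c1 Hf)
    (ex_RInt_scal (V := R_CompleteNormedModule) g a b c2 Hg)).
Qed.

Lemma RInt_const_R (c a b : R) : RInt (fun _ => c) a b = c * (b - a).
Proof.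
  rewrite (RInt_const (V := R_CompleteNormedModule) a b c).
  unfold scal; simpl; unfold mult; simpl. ring.
Qed.

Lemma Defs_RInt_eq (f : R -> R) (a b : R) : ex_RInt f a b -> Defs.RInt f a b = RInt f a b.
Proof.
  intros Hf. unfold Defs.RInt. destruct excluded_middle_informative as [e | n].
  - symmetry. apply RInt_Reals.
  - exfalso. apply n. exists (ex_RInt_Reals_0 f a b Hf). auto.
Qed.

Lemma primitive_derivative (f : R -> R) (lo hi t : R) :
  (forall x, lo < x < hi -> continuity_pt f x) -> lo < 0 < hi -> lo < t < hi ->
  derivable_pt_lim (fun s => RInt f 0 s) t (f t).
Proof.
  intros Hc H0 Ht. apply is_derive_Reals.
  apply (is_derive_RInt f (fun s => RInt f 0 s) 0 t).
  - set (e := Rmin (t - lo) (hi - t)).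
    assert (He : 0 < e) by (unfold e; apply Rmin_case; lra).
    assert (e <= t - lo) by apply Rmin_l. assert (e <= hi - t) by apply Rmin_r.
    exists (mkposreal e He). intros y Hy.
    refine (RInt_correct (V := R_CompleteNormedModule) f 0 y _).
    apply ex_RInt_of_continuity. intros z Hz. apply Hc.
    change (Rabs (y - t) < e) in Hy. apply Rabs_def2 in Hy. destruct Hz as [Hz1 Hz2].
    split; [eapply Rlt_le_trans; [| apply Hz1] | eapply Rle_lt_trans; [apply Hz2 |]];
      [apply Rmin_case | apply Rmax_case]; lra.
  - apply continuous_of_continuity_pt, Hc; auto.
Qed.

Lemma primitive_continuous (f : R -> R) (lo hi t : R) :
  (forall x, lo < x < hi -> continuity_pt f x) -> lo < 0 < hi -> lo < t < hi ->
  continuity_pt (fun s => RInt f 0 s) t.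
Proof.
  intros. apply derivable_continuous_pt. exists (f t). eapply primitive_derivative; eauto.
Qed.

Lemma primitive_bound (f : R -> R) (lo hi t M : R) :
  (forall x, lo < x < hi -> continuity_pt f x) -> lo < 0 -> 0 <= t < hi ->
  (forall s, 0 <= s <= t -> Rabs (f s) <= M) -> Rabs (RInt f 0 t) <= t * M.
Proof.
  intros Hc H0 Ht HM.
  replace t with (t - 0) at 2 by ring.
  apply abs_RInt_le_const; try lra; auto.
  apply ex_RInt_of_continuity. intros z Hz. apply Hc.
  revert Hz. apply Rmin_case; apply Rmax_case; lra.
Qed.

Lemma RInt_derivative (f df : R -> R) (a b : R) : a <= b ->
  (forall x, a <= x <= b -> derivable_pt_lim f x (df x)) ->
  (forall x, a <= x <= b -> continuity_pt df x) -> RInt df a b = f b - f a.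
Proof.
  intros Hab Hd Hc. apply (is_RInt_unique (V := R_CompleteNormedModule)).
  apply (is_RInt_derive (V := R_CompleteNormedModule) f df);
    intros x Hx; rewrite Rmin_left, Rmax_right in Hx by lra;
    [apply is_derive_Reals, Hd | apply continuous_of_continuity_pt, Hc]; auto.
Qed.

(* Pointwise energy inequality behind the uniqueness for D'' = - I D. *)
Lemma energy_inequality (D D1 I C : R) : Rabs I <= C ->
  2 * (D * D1) * (1 - I) <= (1 + Rabs C) * (D * D + D1 * D1).
Proof.
  intros HI.
  assert (Hk : Rabs (1 - I) <= 1 + Rabs C).
  { eapply Rle_trans; [unfold Rminus; apply Rabs_triang |].
    rewrite Rabs_Ropp, Rabs_R1. pose proof (RRle_abs C). lra. }
  assert (Hsq : 2 * Rabs D * Rabs D1 <= D * D + D1 * D1).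
  { rewrite <- (Rabs_pos_eq (D * D)), <- (Rabs_pos_eq (D1 * D1)), !Rabs_mult by nra.
    pose proof (pow2_ge_0 (Rabs D - Rabs D1)). nra. }
  eapply Rle_trans; [apply RRle_abs |].
  rewrite !Rabs_mult, (Rabs_pos_eq 2) by lra.
  pose proof (Rabs_pos D). pose proof (Rabs_pos D1). pose proof (Rabs_pos (1 - I)).
  assert (0 <= D * D + D1 * D1) by nra. nra.
Qed.

(* Uniqueness for the linear equation D'' = - I D with bounded coefficient:
   zero Cauchy data at 0 force D = 0, since the energy
   e^{-k s} (D^2 + D'^2) does not increase for k = 1 + |C|. *)
Lemma linear_ode_zero_data (D D1 I : R -> R) (t1 C : R) : 0 <= t1 ->
  (forall s, 0 <= s <= t1 -> derivable_pt_lim D s (D1 s)) ->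
  (forall s, 0 <= s <= t1 -> continuity_pt D1 s) ->
  (forall s, 0 < s < t1 -> derivable_pt_lim D1 s (- I s * D s)) ->
  (forall s, 0 < s < t1 -> Rabs (I s) <= C) -> D 0 = 0 -> D1 0 = 0 -> D t1 = 0.
Proof.
  intros Ht1 HD HD1c HD1 HI H0 H10.
  set (k := 1 + Rabs C).
  set (G := fun s => exp (- k * s) * (D s * D s + D1 s * D1 s)).
  assert (Hk : forall s, derivable_pt_lim (fun s => exp (- k * s)) s (exp (- k * s) * (- k))).
  { intros s. apply (derivable_pt_lim_comp (fun s => - k * s) exp); [| apply derivable_pt_lim_exp].
    apply derivable_pt_lim_eq with (- k * 1); [| ring].
    apply (derivable_pt_lim_scal id), derivable_pt_lim_id. }
  assert (HG : G t1 <= G 0).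
  { apply (nonincreasing_of_deriv_nonpos G (fun s =>
        exp (- k * s) * (- k) * (D s * D s + D1 s * D1 s) +
        exp (- k * s) * (D1 s * D s + D s * D1 s + ((- I s * D s) * D1 s + D1 s * (- I s * D s)))));
      [lra | | |].
    - intros c Hc. unfold G.
      apply (derivable_pt_lim_mult (fun s => exp (- k * s))
               (fun s => D s * D s + D1 s * D1 s)); [apply Hk |].
      apply (derivable_pt_lim_plus (fun s => D s * D s) (fun s => D1 s * D1 s)).
      + apply (derivable_pt_lim_mult D D); apply HD; lra.
      + apply (derivable_pt_lim_mult D1 D1); apply HD1; lra.
    - intros c Hc. unfold G.
      assert (continuity_pt D c) by (apply derivable_continuous_pt; exists (D1 c); apply HD; auto).
      apply (continuity_pt_mult (fun s => exp (- k * s)) (fun s => D s * D s + D1 s * D1 s)).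
      + apply derivable_continuous_pt. eexists. apply Hk.
      + apply (continuity_pt_plus (fun s => D s * D s) (fun s => D1 s * D1 s));
          [apply (continuity_pt_mult D D) | apply (continuity_pt_mult D1 D1)]; auto.
    - intros c Hc.
      pose proof (energy_inequality (D c) (D1 c) (I c) C (HI c Hc)).
      match goal with |- ?g <= 0 => replace g with
        (exp (- k * c) * (2 * (D c * D1 c) * (1 - I c) - k * (D c * D c + D1 c * D1 c))) by ring end.
      rewrite <- (Rmult_0_r (exp (- k * c))). apply Rmult_le_compat_l; [left; apply exp_pos | unfold k; lra]. }
  unfold G in HG. rewrite H0, H10, Rmult_0_r, exp_0 in HG.
  pose proof (exp_pos (- k * t1)).
  assert (D t1 * D t1 + D1 t1 * D1 t1 <= 0)
    by (apply Rmult_le_reg_l with (exp (- k * t1)); auto; lra).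
  nra.
Qed.

(* Uniqueness for first order equations with a Lipschitz right-hand side:
   if |y1' - y2'| <= L |y1 - y2| on [s, r] and y1 s = y2 s, then
   (y1 - y2)^2 e^{-2 L x} does not increase, so y1 r = y2 r. *)
Lemma lipschitz_ode_uniqueness (y1 y2 f1 f2 : R -> R) (s r L : R) : s <= r -> 0 <= L ->
  (forall x, s <= x <= r -> derivable_pt_lim y1 x (f1 x)) ->
  (forall x, s <= x <= r -> derivable_pt_lim y2 x (f2 x)) ->
  (forall x, s < x < r -> Rabs (f1 x - f2 x) <= L * Rabs (y1 x - y2 x)) ->
  y1 s = y2 s -> y1 r = y2 r.
Proof.
  intros Hsr HL Hy1 Hy2 Hlip Hs.
  set (E := fun x => (y1 x - y2 x) * (y1 x - y2 x) * exp (- (2 * L) * x)).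
  set (dE := fun x => ((f1 x - f2 x) * (y1 x - y2 x) + (y1 x - y2 x) * (f1 x - f2 x))
                        * exp (- (2 * L) * x)
                      + (y1 x - y2 x) * (y1 x - y2 x) * (exp (- (2 * L) * x) * (- (2 * L) * 1))).
  assert (HdE : forall x, s <= x <= r -> derivable_pt_lim E x (dE x)).
  { intros x Hx. unfold E, dE.
    apply (derivable_pt_lim_mult (fun x => (y1 x - y2 x) * (y1 x - y2 x))
                                 (fun x => exp (- (2 * L) * x))).
    - apply (derivable_pt_lim_mult (fun x => y1 x - y2 x) (fun x => y1 x - y2 x));
        apply derivable_pt_lim_minus; auto.
    - apply (derivable_pt_lim_comp (fun x => - (2 * L) * x) exp);
        [apply (derivable_pt_lim_scal id), derivable_pt_lim_id | apply derivable_pt_lim_exp]. }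
  assert (HE : E r <= E s).
  { apply (nonincreasing_of_deriv_nonpos E dE); auto.
    - intros c Hc. apply HdE; lra.
    - intros c Hc. apply derivable_continuous_pt. exists (dE c). apply HdE; auto.
    - intros c Hc. specialize (Hlip c Hc). unfold dE.
      set (g := y1 c - y2 c) in *. set (df := f1 c - f2 c) in *.
      pose proof (exp_pos (- (2 * L) * c)).
      assert (Hgd : df * g <= L * (g * g)).
      { eapply Rle_trans; [apply RRle_abs |]. rewrite Rabs_mult.
        replace (g * g) with (Rabs g * Rabs g) by (rewrite <- Rabs_mult; apply Rabs_pos_eq; nra).
        pose proof (Rabs_pos g). nra. }
      nra. }
  unfold E in HE. rewrite Hs, Rminus_diag, !Rmult_0_l in HE.
  pose proof (exp_pos (- (2 * L) * r)).
  assert ((y1 r - y2 r) * (y1 r - y2 r) <= 0)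
    by (apply Rmult_le_reg_r with (exp (- (2 * L) * r)); auto; lra).
  nra.
Qed.

Definition cont2_at (f : R -> R -> R) (x t : R) : Prop :=
  forall eps, 0 < eps -> exists d, 0 < d /\ forall x' t',
    Rabs (x' - x) < d -> Rabs (t' - t) < d -> Rabs (f x' t' - f x t) < eps.

Lemma cont2_at_continuity_2d (f : R -> R -> R) (x t : R) :
  cont2_at f x t -> continuity_2d_pt f x t.
Proof.
  intros H eps. destruct (H eps (cond_pos eps)) as [d [Hd Hd2]].
  exists (mkposreal d Hd). simpl. intros; apply Hd2; auto.
Qed.

Lemma cont2_at_of_cont2_on (delta T : R) (f g : R -> R -> R) (x t : R) :
  - delta < t < T -> cont2_on (strip delta T) g ->
  (forall x t, strip delta T x t -> f x t = g x t) -> cont2_at f x t.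
Proof.
  intros Ht Hg Heq eps Heps.
  destruct (Hg x t Ht eps Heps) as [d [Hd H]].
  set (r := Rmin d (Rmin (t + delta) (T - t))).
  assert (0 < r) by (unfold r; repeat apply Rmin_case; lra).
  assert (r <= d) by apply Rmin_l.
  assert (r <= t + delta) by (eapply Rle_trans; [apply Rmin_r | apply Rmin_l]).
  assert (r <= T - t) by (eapply Rle_trans; [apply Rmin_r | apply Rmin_r]).
  exists r. split; auto. intros x' t' Hx Ht'.
  assert (Ht'' := Rabs_def2 _ _ Ht').
  rewrite !Heq by (unfold strip; lra). apply H; lra.
Qed.

Lemma continuity_pt_comp2 (f : R -> R -> R) (X Y : R -> R) (s0 : R) :
  cont2_at f (X s0) (Y s0) -> continuity_pt X s0 -> continuity_pt Y s0 ->
  continuity_pt (fun s => f (X s) (Y s)) s0.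
Proof.
  intros Hf HX HY eps Heps.
  destruct (Hf eps Heps) as [d [Hd Hd2]].
  destruct (HX d Hd) as [d1 [Hd1 H1]]. destruct (HY d Hd) as [d2 [Hd2' H2]].
  exists (Rmin d1 d2). split; [apply Rmin_case; auto |].
  intros s [_ Hs]. simpl in *. unfold R_dist in *.
  assert (Rmin d1 d2 <= d1) by apply Rmin_l. assert (Rmin d1 d2 <= d2) by apply Rmin_r.
  destruct (Req_dec s s0) as [-> | Hne].
  - rewrite !Rminus_diag, Rabs_R0. lra.
  - apply Hd2; [apply H1 | apply H2];
      (split; [split; [exact I | intro E; apply Hne; auto] | simpl; unfold R_dist; lra]).
Qed.

Lemma differentiable_of_continuous_partials (f fx ft : R -> R -> R) (x0 t0 r : R) : 0 < r ->
  (forall x t, Rabs (x - x0) < r -> Rabs (t - t0) < r ->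
     derivable_pt_lim (fun y => f y t) x (fx x t)) ->
  (forall x t, Rabs (x - x0) < r -> Rabs (t - t0) < r ->
     derivable_pt_lim (fun s => f x s) t (ft x t)) ->
  cont2_at fx x0 t0 -> cont2_at ft x0 t0 ->
  differentiable_pt_lim f x0 t0 (fx x0 t0) (ft x0 t0).
Proof.
  intros Hr Hfx Hft Cx Ct eps.
  assert (He : 0 < eps / 2) by (generalize (cond_pos eps); lra).
  destruct (Cx _ He) as [d1 [Hd1 H1]]. destruct (Ct _ He) as [d2 [Hd2 H2]].
  set (d := Rmin r (Rmin d1 d2)).
  assert (Hd : 0 < d) by (unfold d; repeat apply Rmin_case; lra).
  assert (d <= r) by apply Rmin_l.
  assert (d <= d1) by (eapply Rle_trans; [apply Rmin_r | apply Rmin_l]).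
  assert (d <= d2) by (eapply Rle_trans; [apply Rmin_r | apply Rmin_r]).
  exists (mkposreal _ Hd). simpl. intros u v Hu Hv.
  (* f u v - f x0 t0 = fx z v (u - x0) + ft x0 w (v - t0) by two mean values *)
  destruct (mvt_segment (fun y => f y v) (fun y => fx y v) x0 u) as [z [Hz Ez]].
  { intros z Hz. apply Hfx; [apply Rabs_segment in Hz |]; lra. }
  destruct (mvt_segment (fun s => f x0 s) (fun s => ft x0 s) t0 v) as [w [Hw Ew]].
  { intros w Hw. apply Hft; [rewrite Rminus_diag, Rabs_R0 | apply Rabs_segment in Hw]; lra. }
  simpl in Ez, Ew. apply Rabs_segment in Hz. apply Rabs_segment in Hw.
  assert (A1 : Rabs (fx z v - fx x0 t0) < eps / 2) by (apply H1; lra).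
  assert (A2 : Rabs (ft x0 w - ft x0 t0) < eps / 2)
    by (apply H2; [rewrite Rminus_diag, Rabs_R0 |]; lra).
  replace (f u v - f x0 t0 - (fx x0 t0 * (u - x0) + ft x0 t0 * (v - t0)))
    with ((fx z v - fx x0 t0) * (u - x0) + (ft x0 w - ft x0 t0) * (v - t0)) by lra.
  eapply Rle_trans; [apply Rabs_triang |]. rewrite !Rabs_mult.
  assert (Rabs (u - x0) <= Rmax (Rabs (u - x0)) (Rabs (v - t0))) by apply Rmax_l.
  assert (Rabs (v - t0) <= Rmax (Rabs (u - x0)) (Rabs (v - t0))) by apply Rmax_r.
  pose proof (Rabs_pos (u - x0)). pose proof (Rabs_pos (v - t0)).
  pose proof (Rabs_pos (fx z v - fx x0 t0)). pose proof (Rabs_pos (ft x0 w - ft x0 t0)).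
  nra.
Qed.

(* Chaining the modulus of uniform continuity for eps = 1 along the ray to
   (a, c): on the box, |f - f(a, c)| grows at most by 1 per step de / 2. *)
Lemma uniform_continuity_chain (f : R -> R -> R) (a b c d de : R) : 0 < de ->
  (forall x y u v, a <= x <= b -> c <= y <= d -> a <= u <= b -> c <= v <= d ->
     Rabs (u - x) < de -> Rabs (v - y) < de -> Rabs (f u v - f x y) < 1) ->
  forall (n : nat) x y, a <= x <= b -> c <= y <= d ->
    Rabs (x - a) <= INR n * de / 2 -> Rabs (y - c) <= INR n * de / 2 ->
    Rabs (f x y - f a c) <= INR n.
Proof.
  intros Hde Hu n. induction n as [| n IHn]; intros x y Hx Hy Hxa Hyc.
  - simpl in *. pose proof (Rabs_pos (x - a)). pose proof (Rabs_pos (y - c)).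
    assert (x = a) by (apply Rabs_le_between in Hxa; lra).
    assert (y = c) by (apply Rabs_le_between in Hyc; lra).
    subst. rewrite Rminus_diag, Rabs_R0; lra.
  - rewrite S_INR in *. pose proof (pos_INR n).
    (* step back by the fraction 1 / (n + 1) towards (a, c) *)
    set (k := / (INR n + 1)).
    assert (Hk : 0 < k) by (apply Rinv_0_lt_compat; lra).
    assert (Hk1 : INR n * k + k = 1) by (unfold k; field; lra).
    assert (Hstep : forall z z0, Rabs (z - z0) <= (INR n + 1) * de / 2 ->
      Rabs ((z - z0) * k) <= de / 2 /\ Rabs ((z - z0) * (INR n * k)) <= INR n * de / 2).
    { intros z z0 Hz. rewrite !Rabs_mult, (Rabs_pos_eq k), (Rabs_pos_eq (INR n)) by lra.
      split; [replace (de / 2) with ((INR n + 1) * de / 2 * k) by (unfold k; field; lra)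
             | replace (INR n * de / 2) with ((INR n + 1) * de / 2 * (INR n * k))
                 by (unfold k; field; lra)];
      apply Rmult_le_compat_r; nra. }
    destruct (Hstep x a Hxa) as [Sx Tx]. destruct (Hstep y c Hyc) as [Sy Ty].
    set (x' := a + (x - a) * (INR n * k)). set (y' := c + (y - c) * (INR n * k)).
    assert (Hq : 0 <= INR n * k <= 1) by nra.
    assert (Hx' : a <= x' <= b)
      by (unfold x'; split; [| assert ((x - a) * (INR n * k) <= x - a)]; nra).
    assert (Hy' : c <= y' <= d)
      by (unfold y'; split; [| assert ((y - c) * (INR n * k) <= y - c)]; nra).
    assert (IH := IHn x' y' Hx' Hy').
    unfold x', y' in IH. replace (a + _ - a) with ((x - a) * (INR n * k)) in IH by ring.
    replace (c + _ - c) with ((y - c) * (INR n * k)) in IH by ring.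
    specialize (IH Tx Ty).
    assert (Hlast : Rabs (f x y - f x' y') < 1).
    { apply Hu; auto; [unfold x' | unfold y'].
      - replace (x - (a + (x - a) * (INR n * k))) with ((x - a) * k) by (unfold k; field; lra).
        pose proof (Rabs_pos ((x - a) * k)). lra.
      - replace (y - (c + (y - c) * (INR n * k))) with ((y - c) * k) by (unfold k; field; lra).
        pose proof (Rabs_pos ((y - c) * k)). lra. }
    replace (f x y - f a c) with ((f x y - f x' y') + (f x' y' - f a c)) by ring.
    eapply Rle_trans; [apply Rabs_triang | unfold x', y' in *; lra].
Qed.

Lemma bounded_on_box (f : R -> R -> R) (a b c d : R) : a <= b -> c <= d ->
  (forall x y, a <= x <= b -> c <= y <= d -> continuity_2d_pt f x y) ->
  exists M, forall x y, a <= x <= b -> c <= y <= d -> Rabs (f x y) <= M.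
Proof.
  intros Hab Hcd Hc.
  destruct (uniform_continuity_2d f a b c d Hc (mkposreal 1 Rlt_0_1)) as [[de Hde] Hu].
  destruct (INR_unbounded (2 * (b - a + d - c) / de)) as [n Hn].
  exists (Rabs (f a c) + INR n). intros x y Hx Hy.
  assert (Hn2 : b - a + d - c <= INR n * de / 2).
  { apply Rmult_le_reg_r with (2 / de); [apply Rdiv_lt_0_compat; lra |].
    replace (INR n * de / 2 * (2 / de)) with (INR n) by (field; lra). lra. }
  assert (Rabs (f x y - f a c) <= INR n)
    by (apply (uniform_continuity_chain f a b c d de); auto; rewrite Rabs_pos_eq; lra).
  replace (f x y) with (f a c + (f x y - f a c)) by ring.
  eapply Rle_trans; [apply Rabs_triang | lra].
Qed.

Lemma smooth_regularity (delta T : R) (u ux uxx uxt : R -> R -> R) :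
  smooth_on (strip delta T) u ->
  is_dx_on (strip delta T) u ux ->
  is_dx_on (strip delta T) ux uxx ->
  is_dt_on (strip delta T) ux uxt ->
  forall x t, - delta < t < T ->
    cont2_at u x t /\ cont2_at ux x t /\ cont2_at uxx x t /\ cont2_at uxt x t.
Proof.
  intros Hs Hux Huxx Huxt.
  destruct Hs as [Hcu [fx [Hfx Hsfx]] _].
  destruct Hsfx as [Hcfx [fxx [Hfxx Hsfxx]] [fxt [Hfxt Hsfxt]]].
  destruct Hsfxx as [Hcfxx _ _]. destruct Hsfxt as [Hcfxt _ _].
  assert (E1 : forall x t, strip delta T x t -> ux x t = fx x t)
    by (intros x t H; eapply uniqueness_limite; [apply Hux | apply Hfx]; auto).
  assert (E2 : forall x t, strip delta T x t -> uxx x t = fxx x t).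
  { intros x t H. eapply uniqueness_limite; [apply Huxx; auto |].
    replace (fun y => ux y t) with (fun y => fx y t); [apply Hfxx; auto |].
    apply functional_extensionality; intro y; rewrite E1; auto. }
  assert (E3 : forall x t, strip delta T x t -> uxt x t = fxt x t).
  { intros x t H. eapply uniqueness_limite; [apply Huxt; auto |].
    unfold strip in H.
    apply (derivable_pt_lim_ext_loc (fun s => fx x s) _ t (Rmin (t + delta) (T - t)));
      [apply Rmin_case; lra | | apply Hfxt; auto].
    intros s Hs. apply Rabs_def2 in Hs.
    assert (Rmin (t + delta) (T - t) <= t + delta) by apply Rmin_l.
    assert (Rmin (t + delta) (T - t) <= T - t) by apply Rmin_r.
    rewrite E1; auto. unfold strip; lra. }
  intros x t Ht. repeat split.
  - apply (cont2_at_of_cont2_on delta T u u); auto.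
  - apply (cont2_at_of_cont2_on delta T ux fx); auto.
  - apply (cont2_at_of_cont2_on delta T uxx fxx); auto.
  - apply (cont2_at_of_cont2_on delta T uxt fxt); auto.
Qed.

Section Lagrangian.
Variables (T delta : R) (u ux uxx uxt : R -> R -> R).
Hypothesis HT : 0 < T.
Hypothesis Hdelta : 0 < delta.
Hypothesis Hcont_u : forall x t, - delta < t < T -> cont2_at u x t.
Hypothesis Hcont_ux : forall x t, - delta < t < T -> cont2_at ux x t.
Hypothesis Hcont_uxx : forall x t, - delta < t < T -> cont2_at uxx x t.
Hypothesis Hcont_uxt : forall x t, - delta < t < T -> cont2_at uxt x t.
Hypothesis Hux : is_dx_on (strip delta T) u ux.
Hypothesis Huxx : is_dx_on (strip delta T) ux uxx.
Hypothesis Huxt : is_dt_on (strip delta T) ux uxt.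

Definition trajectory (y : R -> R) : Prop :=
  (forall t, 0 < t < T -> derivable_pt_lim y t (u (y t) t)) /\
  (forall eps, 0 < eps -> exists d, 0 < d /\ forall s, 0 <= s < d -> Rabs (y s - y 0) < eps).

(* Constant extension to negative times, so that primitives of expressions
   along y are taken on an open interval containing 0. *)
Definition extend0 (y : R -> R) (s : R) : R := y (Rmax 0 s).

Lemma extend0_nonneg (y : R -> R) (s : R) : 0 <= s -> extend0 y s = y s.
Proof. intros; unfold extend0; rewrite Rmax_right; auto. Qed.

Lemma extend0_continuous (y : R -> R) : trajectory y ->
  forall s, s < T -> continuity_pt (extend0 y) s.
Proof.
  intros [Hd Hr] s Hs. destruct (Rle_or_lt s 0) as [Hs0 | Hs0].
  - intros eps Heps. destruct (Hr eps Heps) as [d [Hd0 H]]. exists d. split; auto.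
    intros x [_ Hx]. simpl in *. unfold R_dist, extend0 in *.
    rewrite (Rmax_left 0 s) by lra. unfold Rmax. destruct Rle_dec.
    + apply H. apply Rabs_def2 in Hx. lra.
    + rewrite Rminus_diag, Rabs_R0; auto.
  - apply (continuity_pt_ext_loc y _ s s); auto.
    + intros z Hz. apply Rabs_def2 in Hz. unfold extend0. rewrite Rmax_right; lra.
    + apply derivable_continuous_pt. exists (u (y s) s). apply Hd; lra.
Qed.

Lemma extend0_derivative (y : R -> R) : trajectory y ->
  forall c, 0 < c < T -> derivable_pt_lim (extend0 y) c (u (y c) c).
Proof.
  intros [Hd _] c Hc. apply (derivable_pt_lim_ext_loc y _ c c); try lra; [| apply Hd; auto].
  intros z Hz. apply Rabs_def2 in Hz. unfold extend0. rewrite Rmax_right; lra.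
Qed.

Definition slope (x y s : R) : R :=
  if Req_EM_T x y then ux y s else (u x s - u y s) / (x - y).

Lemma slope_spec (x y s : R) : slope x y s * (x - y) = u x s - u y s.
Proof. unfold slope. destruct Req_EM_T; [subst; ring | field; lra]. Qed.

Lemma slope_diag (x s : R) : slope x x s = ux x s.
Proof. unfold slope. destruct Req_EM_T as [_ | n]; [auto | contradiction]. Qed.

Lemma slope_mvt (x y s : R) : - delta < s < T ->
  exists z, Rmin y x <= z <= Rmax y x /\ slope x y s = ux z s.
Proof.
  intros Hs. unfold slope. destruct Req_EM_T.
  - subst. exists y. split; [split; [apply Rmin_l | apply Rmax_l] | auto].
  - destruct (mvt_segment (fun z => u z s) (fun z => ux z s) y x) as [z [Hz Ez]].
    + intros; apply Hux; unfold strip; lra.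
    + exists z. split; auto. simpl in Ez. rewrite Ez. field. lra.
Qed.

Lemma slope_continuous_diag (X Y : R -> R) (s0 : R) : s0 < T ->
  continuity_pt X s0 -> continuity_pt Y s0 -> X s0 = Y s0 ->
  continuity_pt (fun s => slope (X s) (Y s) (Rmax 0 s)) s0.
Proof.
  intros Hs0 HX HY E eps Heps.
  assert (HR : forall s, Rabs (s - s0) < T - s0 -> - delta < Rmax 0 s < T).
  { intros s Hs. apply Rabs_def2 in Hs.
    split; [apply Rlt_le_trans with 0; [lra | apply Rmax_l] | apply Rmax_case; lra]. }
  destruct (Hcont_ux (Y s0) (Rmax 0 s0) (HR s0 ltac:(rewrite Rminus_diag, Rabs_R0; lra))
              eps Heps) as [d1 [Hd1 H1]].
  destruct (HX d1 Hd1) as [dX [HdX HX1]]. destruct (HY d1 Hd1) as [dY [HdY HY1]].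
  set (d := Rmin (Rmin dX dY) (Rmin d1 (T - s0))).
  assert (Hd : 0 < d) by (unfold d; repeat apply Rmin_case; lra).
  assert (d <= dX) by (unfold d; eapply Rle_trans; [apply Rmin_l | apply Rmin_l]).
  assert (d <= dY) by (unfold d; eapply Rle_trans; [apply Rmin_l | apply Rmin_r]).
  assert (d <= d1) by (unfold d; eapply Rle_trans; [apply Rmin_r | apply Rmin_l]).
  assert (d <= T - s0) by (unfold d; eapply Rle_trans; [apply Rmin_r | apply Rmin_r]).
  exists d. split; auto. intros s [_ Hs]. simpl in *. unfold R_dist in *.
  assert (EX : Rabs (X s - X s0) < d1).
  { destruct (Req_dec s s0) as [-> |]; [rewrite Rminus_diag, Rabs_R0; lra |].
    apply HX1; split; [split; auto; exact I | lra]. }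
  assert (EY : Rabs (Y s - Y s0) < d1).
  { destruct (Req_dec s s0) as [-> |]; [rewrite Rminus_diag, Rabs_R0; lra |].
    apply HY1; split; [split; auto; exact I | lra]. }
  destruct (slope_mvt (X s) (Y s) (Rmax 0 s)) as [z [Hz Ez]]; [apply HR; lra |].
  rewrite Ez, E, slope_diag. apply H1.
  - revert Hz EX EY. rewrite E. apply Rmin_case_strong; apply Rmax_case_strong; intros;
      unfold Rabs in *; repeat destruct Rcase_abs; lra.
  - eapply Rle_lt_trans; [apply Rmax0_lipschitz | lra].
Qed.

Lemma slope_continuous (X Y : R -> R) (s0 : R) : s0 < T ->
  continuity_pt X s0 -> continuity_pt Y s0 ->
  continuity_pt (fun s => slope (X s) (Y s) (Rmax 0 s)) s0.
Proof.
  intros Hs0 HX HY.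
  destruct (Req_dec (X s0) (Y s0)) as [E | E]; [apply slope_continuous_diag; auto |].
  (* off the diagonal the slope is a quotient of continuous functions *)
  assert (HXY : continuity_pt (fun s => X s - Y s) s0) by (apply continuity_pt_minus; auto).
  destruct (HXY (Rabs (X s0 - Y s0))) as [d [Hd Hd2]]; [apply Rabs_pos_lt; lra |].
  apply (continuity_pt_ext_loc
           (fun s => (u (X s) (Rmax 0 s) - u (Y s) (Rmax 0 s)) / (X s - Y s)) _ s0 d Hd).
  - intros s Hs. unfold slope. destruct Req_EM_T as [e |]; auto. exfalso.
    destruct (Req_dec s s0) as [-> | Hne]; [lra |].
    assert (Habs : Rabs (X s - Y s - (X s0 - Y s0)) < Rabs (X s0 - Y s0))
      by (apply Hd2; split; [split; auto; exact I | auto]).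
    rewrite e, Rminus_diag, Rminus_0_l, Rabs_Ropp in Habs. lra.
  - assert (HR : - delta < Rmax 0 s0 < T) by (split; [apply Rlt_le_trans with 0; [lra | apply Rmax_l] | apply Rmax_case; lra]).
    apply continuity_pt_div; [apply continuity_pt_minus | auto | lra];
      apply continuity_pt_comp2; auto using Rmax0_continuous.
Qed.

(* Rate of separation of two trajectories: (y - z)' = gap_rate y z * (y - z). *)
Definition gap_rate (y z : R -> R) (s : R) : R :=
  slope (extend0 y s) (extend0 z s) (Rmax 0 s).

Lemma gap_rate_nonneg (y z : R -> R) (s : R) : 0 <= s ->
  gap_rate y z s = slope (y s) (z s) s.
Proof. intros; unfold gap_rate; rewrite !extend0_nonneg, Rmax_right; auto. Qed.

Lemma gap_rate_continuous (y z : R -> R) : trajectory y -> trajectory z ->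
  forall s, s < T -> continuity_pt (gap_rate y z) s.
Proof. intros. apply slope_continuous; auto; apply extend0_continuous; auto. Qed.

Lemma trajectory_gap (y z : R -> R) : trajectory y -> trajectory z ->
  forall t, 0 <= t < T -> y t - z t = (y 0 - z 0) * exp (RInt (gap_rate y z) 0 t).
Proof.
  intros Hy Hz t Ht.
  set (q := gap_rate y z).
  set (P := fun s => (extend0 y s - extend0 z s) * exp (- RInt q 0 s)).
  assert (HC : forall s, -1 < s < T -> continuity_pt q s)
    by (intros; apply gap_rate_continuous; auto; lra).
  assert (HP : P t = P 0).
  { apply constant_of_deriv_zero; [lra | |].
    - intros c Hc.
      apply derivable_pt_lim_eq with
        ((u (y c) c - u (z c) c) * exp (- RInt q 0 c) +
         (extend0 y c - extend0 z c) * (exp (- RInt q 0 c) * (- q c))).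
      + apply (derivable_pt_lim_mult (fun s => extend0 y s - extend0 z s)
                 (fun s => exp (- RInt q 0 s))).
        * apply (derivable_pt_lim_minus (extend0 y) (extend0 z));
            apply extend0_derivative; auto; lra.
        * apply (derivable_pt_lim_comp (fun s => - RInt q 0 s) exp);
            [| apply derivable_pt_lim_exp].
          apply (derivable_pt_lim_opp (fun s => RInt q 0 s)).
          apply (primitive_derivative _ (-1) T); auto; lra.
      + unfold q, gap_rate, extend0. rewrite Rmax_right by lra.
        rewrite <- (slope_spec (y c) (z c) c). ring.
    - intros c Hc. apply (continuity_pt_mult (fun s => extend0 y s - extend0 z s)
                            (fun s => exp (- RInt q 0 s))).
      + apply (continuity_pt_minus (extend0 y) (extend0 z)); apply extend0_continuous; auto; lra.
      + apply (continuity_pt_comp (fun s => - RInt q 0 s) exp);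
          [| apply derivable_continuous_pt, derivable_pt_exp].
        apply (continuity_pt_opp (fun s => RInt q 0 s)).
        apply (primitive_continuous _ (-1) T); auto; lra. }
  unfold P in HP. rewrite !extend0_nonneg, RInt_point_R, Ropp_0, exp_0, Rmult_1_r in HP by lra.
  rewrite <- HP, Rmult_assoc, <- exp_plus, Rplus_opp_l, exp_0. ring.
Qed.

Lemma trajectory_unique (y z : R -> R) : trajectory y -> trajectory z -> y 0 = z 0 ->
  forall t, 0 <= t < T -> y t = z t.
Proof.
  intros Hy Hz H0 t Ht. pose proof (trajectory_gap y z Hy Hz t Ht) as E.
  rewrite H0, Rminus_diag, Rmult_0_l in E. lra.
Qed.

Lemma trajectory_monotone (y z : R -> R) : trajectory y -> trajectory z -> y 0 <= z 0 ->
  forall t, 0 <= t < T -> y t <= z t.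
Proof.
  intros Hy Hz H0 t Ht. pose proof (trajectory_gap z y Hz Hy t Ht) as E.
  pose proof (exp_pos (RInt (gap_rate z y) 0 t)). nra.
Qed.

Lemma u0'_continuous (x : R) : continuity_pt (fun a => ux a 0) x.
Proof.
  apply (continuity_pt_comp2 ux (fun b => b) (fun _ => 0) x);
    [apply Hcont_ux; lra | apply continuity_pt_id | apply continuity_pt_const; intros ? ?; auto].
Qed.

Lemma Jpow_inv_continuous (e x : R) (n : nat) : 1 - e * ux x 0 <> 0 ->
  continuity_pt (fun a => / (1 - e * ux a 0) ^ n) x.
Proof.
  intros Hx. apply (continuity_pt_comp (fun a => ux a 0) (fun v => / (1 - e * v) ^ n));
    [apply u0'_continuous |].
  apply (continuity_pt_inv (fun v => (1 - e * v) ^ n)); [| apply pow_nonzero; auto].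
  apply derivable_continuous_pt, (derivable_pt_comp (fun v => 1 - e * v) (fun w => w ^ n));
    [| apply derivable_pt_pow].
  apply derivable_pt_minus; [apply derivable_pt_const | apply derivable_pt_scal, derivable_pt_id].
Qed.

(* kbar i e = \int_0^1 (1 - e u0')^-(i+1), i.e. Kbar_i at a time where eta = e. *)
Definition kbar (i : nat) (e : R) : R := RInt (fun a => / (1 - e * ux a 0) ^ (i + 1)) 0 1.

Lemma ex_RInt_Jpow_inv (e : R) (n : nat) :
  (forall a, 0 <= a <= 1 -> 0 < 1 - e * ux a 0) ->
  ex_RInt (fun a => / (1 - e * ux a 0) ^ n) 0 1.
Proof.
  intros Hpos. apply ex_RInt_of_continuity. intros z Hz.
  rewrite Rmin_left, Rmax_right in Hz by lra.
  apply Jpow_inv_continuous, Rgt_not_eq, Hpos; auto.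
Qed.

Lemma Kbar_kbar (i : nat) (eta : R -> R) (t : R) :
  (forall a, 0 <= a <= 1 -> 0 < 1 - eta t * ux a 0) ->
  Kbar i (fun a => ux a 0) eta t = kbar i (eta t).
Proof.
  intros Hpos. unfold Kbar, K, J, kbar. apply Defs_RInt_eq, ex_RInt_Jpow_inv; auto.
Qed.

Definition admissible (m e : R) : Prop := forall a, 0 <= a <= 1 -> m <= 1 - e * ux a 0.

Lemma u0'_bounded : exists P, 0 <= P /\ forall a, 0 <= a <= 1 -> Rabs (ux a 0) <= P.
Proof.
  destruct (continuity_ab_maj (fun a => Rabs (ux a 0)) 0 1) as [aP [HP _]]; [lra | |].
  - intros c _. apply (continuity_pt_comp (fun a => ux a 0) Rabs);
      [apply u0'_continuous | apply Rcontinuity_abs].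
  - exists (Rabs (ux aP 0)). split; [apply Rabs_pos | auto].
Qed.

Section MeanBounds.
Variables (m P : R).
Hypothesis Hm : 0 < m.
Hypothesis HP : forall a, 0 <= a <= 1 -> Rabs (ux a 0) <= P.

Lemma admissible_near (e0 e : R) : admissible m e0 -> Rabs (e - e0) * P <= m / 2 ->
  admissible (m / 2) e.
Proof.
  intros He0 He a Ha. specialize (He0 a Ha).
  assert (Hd : Rabs ((e - e0) * ux a 0) <= m / 2).
  { rewrite Rabs_mult. eapply Rle_trans; [| apply He].
    apply Rmult_le_compat_l; [apply Rabs_pos | auto]. }
  apply Rabs_le_between in Hd. nra.
Qed.

Lemma kbar0_bounds (e : R) : admissible m e -> / (1 + Rabs e * P) <= kbar 0 e <= / m.
Proof.
  intros He. pose proof (Rabs_pos e).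
  assert (HP0 : 0 <= P) by (eapply Rle_trans; [apply Rabs_pos | apply (HP 0); lra]).
  assert (Hex := ex_RInt_Jpow_inv e (0 + 1) ltac:(intros a Ha; specialize (He a Ha); lra)).
  assert (Hc : forall c, ex_RInt (fun _ => c) 0 1)
    by (intros; apply ex_RInt_of_continuity; intros; apply continuity_pt_const; intros ? ?; auto).
  unfold kbar; split.
  - replace (/ (1 + Rabs e * P)) with (RInt (fun _ => / (1 + Rabs e * P)) 0 1)
      by (rewrite RInt_const_R; simpl; ring).
    apply RInt_le; auto; [lra |]. intros a Ha. specialize (He a ltac:(lra)).
    assert (Habs : Rabs (e * ux a 0) <= Rabs e * P)
      by (rewrite Rabs_mult; apply Rmult_le_compat_l; [| apply HP]; auto; lra).
    apply Rabs_le_between in Habs. simpl. rewrite Rmult_1_r. apply Rinv_le_contravar; lra.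
  - replace (/ m) with (RInt (fun _ => / m) 0 1) by (rewrite RInt_const_R; simpl; ring).
    apply RInt_le; auto; [lra |]. intros a Ha. specialize (He a ltac:(lra)).
    simpl. rewrite Rmult_1_r. apply Rinv_le_contravar; lra.
Qed.

Lemma kbar0_lipschitz (e1 e2 : R) : admissible m e1 -> admissible m e2 ->
  Rabs (kbar 0 e1 - kbar 0 e2) <= P / m ^ 2 * Rabs (e1 - e2).
Proof.
  intros H1 H2.
  assert (Hpos : forall e, admissible m e -> forall a, 0 <= a <= 1 -> 0 < 1 - e * ux a 0)
    by (intros e He a Ha; specialize (He a Ha); lra).
  unfold kbar. rewrite <- RInt_minus_R by (apply ex_RInt_Jpow_inv; auto).
  replace (P / m ^ 2 * Rabs (e1 - e2)) with ((1 - 0) * (P / m ^ 2 * Rabs (e1 - e2))) by ring.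
  apply abs_RInt_le_const; [lra | |].
  - apply ex_RInt_of_continuity. intros z Hz. rewrite Rmin_left, Rmax_right in Hz by lra.
    apply continuity_pt_minus; apply Jpow_inv_continuous, Rgt_not_eq, Hpos; auto.
  - intros a Ha. specialize (H1 a Ha). specialize (H2 a Ha). specialize (HP a Ha).
    simpl. rewrite !Rmult_1_r.
    replace (/ (1 - e1 * ux a 0) - / (1 - e2 * ux a 0))
      with ((e1 - e2) * ux a 0 * (/ (1 - e1 * ux a 0) * / (1 - e2 * ux a 0)))
      by (field; split; lra).
    rewrite !Rabs_mult, (Rabs_pos_eq (/ (1 - e1 * ux a 0))), (Rabs_pos_eq (/ (1 - e2 * ux a 0)))
      by (left; apply Rinv_0_lt_compat; lra).
    assert (/ (1 - e1 * ux a 0) <= / m) by (apply Rinv_le_contravar; lra).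
    assert (/ (1 - e2 * ux a 0) <= / m) by (apply Rinv_le_contravar; lra).
    assert (0 < / (1 - e1 * ux a 0)) by (apply Rinv_0_lt_compat; lra).
    assert (0 < / (1 - e2 * ux a 0)) by (apply Rinv_0_lt_compat; lra).
    replace (P / (m * m) * Rabs (e1 - e2)) with (Rabs (e1 - e2) * P * (/ m * / m))
      by (field; lra).
    pose proof (Rabs_pos (e1 - e2)). pose proof (Rabs_pos (ux a 0)).
    apply Rmult_le_compat; [nra | nra | apply Rmult_le_compat_l; auto | nra].
Qed.

(* Hence so is the right-hand side e |-> Kbar_0(e)^-2 of the equation for
   eta, on admissible parameters bounded by E. *)
Lemma eta_rhs_lipschitz (E e1 e2 : R) : admissible m e1 -> admissible m e2 ->
  Rabs e1 <= E -> Rabs e2 <= E ->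
  Rabs (/ kbar 0 e1 ^ 2 - / kbar 0 e2 ^ 2)
    <= 2 / m * (1 + E * P) ^ 4 * (P / m ^ 2) * Rabs (e1 - e2).
Proof.
  intros H1 H2 HE1 HE2.
  assert (HP0 : 0 <= P) by (eapply Rle_trans; [apply Rabs_pos | apply (HP 0); lra]).
  assert (HE : 0 <= E) by (pose proof (Rabs_pos e1); lra).
  set (c := / (1 + E * P)).
  assert (Hc : 0 < c) by (unfold c; apply Rinv_0_lt_compat; nra).
  assert (Hlow : forall e, admissible m e -> Rabs e <= E -> c <= kbar 0 e <= / m).
  { intros e He HeE. destruct (kbar0_bounds e He) as [Hl Hu]. split; auto.
    eapply Rle_trans; [| apply Hl]. apply Rinv_le_contravar; [| nra].
    pose proof (Rabs_pos e). nra. }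
  destruct (Hlow e1 H1 HE1) as [K1a K1b]. destruct (Hlow e2 H2 HE2) as [K2a K2b].
  assert (HL := kbar0_lipschitz e1 e2 H1 H2).
  replace (/ kbar 0 e1 ^ 2 - / kbar 0 e2 ^ 2)
    with ((kbar 0 e2 - kbar 0 e1) * ((kbar 0 e1 + kbar 0 e2) * / (kbar 0 e1 ^ 2 * kbar 0 e2 ^ 2)))
    by (field; split; lra).
  assert (Hfac : 0 <= (kbar 0 e1 + kbar 0 e2) * / (kbar 0 e1 ^ 2 * kbar 0 e2 ^ 2)
              <= 2 / m * (1 + E * P) ^ 4).
  { replace (2 / m * (1 + E * P) ^ 4) with ((/ m + / m) * / c ^ 4)
      by (unfold c; field; repeat split; nra).
    split; [apply Rmult_le_pos; [lra | left; apply Rinv_0_lt_compat, Rmult_lt_0_compat; apply pow_lt; lra] |].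
    apply Rmult_le_compat; [lra | left; apply Rinv_0_lt_compat, Rmult_lt_0_compat; apply pow_lt; lra
                           | lra |].
    apply Rinv_le_contravar; [apply pow_lt; lra |].
    replace (c ^ 4) with (c ^ 2 * c ^ 2) by ring.
    apply Rmult_le_compat; try (apply pow_le; lra); apply pow_incr; lra. }
  rewrite Rabs_mult, (Rabs_pos_eq (_ * _)) by lra.
  rewrite <- Rabs_Ropp, Ropp_minus_distr.
  pose proof (Rabs_pos (kbar 0 e1 - kbar 0 e2)). pose proof (Rabs_pos (e1 - e2)).
  assert (0 <= P / m ^ 2) by (apply Rmult_le_pos; [lra | left; apply Rinv_0_lt_compat, pow_lt; lra]).
  nra.
Qed.

End MeanBounds.

Lemma admissible_open (e0 : R) : (forall a, 0 <= a <= 1 -> 0 < 1 - e0 * ux a 0) ->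
  exists m P r, 0 < m /\ 0 < r /\ (forall a, 0 <= a <= 1 -> Rabs (ux a 0) <= P) /\
    forall e, Rabs (e - e0) <= r -> admissible m e.
Proof.
  intros He0.
  destruct (continuity_ab_min (fun a => 1 - e0 * ux a 0) 0 1) as [am [Ham Ham01]]; [lra | |].
  { intros c _. apply continuity_pt_minus; [apply continuity_pt_const; intros ? ?; auto |].
    apply continuity_pt_scal, u0'_continuous. }
  set (m := 1 - e0 * ux am 0).
  assert (Hm : 0 < m) by (apply He0; auto).
  destruct u0'_bounded as [P [HP0 HP]].
  set (r := m / (2 * (P + 1))).
  exists (m / 2), P, r. split; [lra | split; [unfold r; apply Rdiv_lt_0_compat; lra | split; auto]].
  intros e He. apply (admissible_near m P HP e0); [exact Ham |].
  apply Rle_trans with (r * P); [apply Rmult_le_compat_r; lra |].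
  unfold r. apply (Rmult_le_reg_r (2 * (P + 1))); [lra | field_simplify; nra].
Qed.

Variable gamma : R -> R -> R.
Hypothesis Hflow : forall a, trajectory (gamma a).
Hypothesis Hflow0 : forall a, gamma a 0 = a.

Lemma slope_bound (x0 x1 s t m M L : R) : 0 <= s <= t -> t < T ->
  m <= x0 <= M -> Rabs (x1 - x0) < 1 ->
  (forall x s, m - 1 <= x <= M + 1 -> 0 <= s <= t -> Rabs (ux x s) <= L) ->
  Rabs (slope x1 x0 s) <= L.
Proof.
  intros Hs Ht Hx0 Hx1 HL.
  destruct (slope_mvt x1 x0 s) as [z [Hz ->]]; [lra |].
  apply HL; [| lra]. apply Rabs_segment in Hz.
  assert (Hz' := proj1 (Rabs_le_between _ _) Hz). lra.
Qed.

Lemma gap_growth (y z : R -> R) (s L : R) : trajectory y -> trajectory z -> 0 <= s < T ->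
  (forall r, 0 <= r <= s -> Rabs (gap_rate y z r) <= L) ->
  Rabs (y s - z s) <= Rabs (y 0 - z 0) * exp (s * L).
Proof.
  intros Hy Hz Hs HL.
  rewrite (trajectory_gap y z Hy Hz s Hs), Rabs_mult, (Rabs_pos_eq (exp _))
    by (left; apply exp_pos).
  apply Rmult_le_compat_l; [apply Rabs_pos |].
  assert (HI : Rabs (RInt (gap_rate y z) 0 s) <= s * L)
    by (apply (primitive_bound _ (-1) T); try lra; auto;
        intros; apply gap_rate_continuous; auto; lra).
  apply exp_le_compat. apply Rabs_le_between in HI. lra.
Qed.

Lemma trajectory_bounds (a t : R) : 0 <= t < T -> exists m M L,
  (forall s, 0 <= s <= t -> m <= gamma a s <= M) /\
  (forall x s, m - 1 <= x <= M + 1 -> 0 <= s <= t -> Rabs (ux x s) <= L).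
Proof.
  intros Ht.
  assert (Hc : forall c, 0 <= c <= t -> continuity_pt (extend0 (gamma a)) c)
    by (intros; apply extend0_continuous; auto; lra).
  destruct (continuity_ab_maj (extend0 (gamma a)) 0 t) as [cM [HcM _]]; [lra | auto |].
  destruct (continuity_ab_min (extend0 (gamma a)) 0 t) as [cm [Hcm _]]; [lra | auto |].
  set (M := extend0 (gamma a) cM). set (m := extend0 (gamma a) cm).
  assert (Hm : forall s, 0 <= s <= t -> m <= gamma a s <= M)
    by (intros s Hs; rewrite <- (extend0_nonneg (gamma a) s) by lra; split; auto).
  assert (HmM : m <= M) by (specialize (Hm 0); lra).
  destruct (bounded_on_box ux (m - 1) (M + 1) 0 t) as [L HL]; try lra.
  - intros x y _ Hy. apply cont2_at_continuity_2d, Hcont_ux. lra.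
  - exists m, M, L. auto.
Qed.

Lemma gap_bound_while_close (a b t m M L r : R) : 0 <= r <= t -> t < T ->
  (forall s, 0 <= s <= t -> m <= gamma a s <= M) ->
  (forall x s, m - 1 <= x <= M + 1 -> 0 <= s <= t -> Rabs (ux x s) <= L) ->
  (forall r', 0 <= r' <= r -> Rabs (gamma b r' - gamma a r') < 1) ->
  Rabs (gamma b r - gamma a r) <= Rabs (b - a) * exp (L * t).
Proof.
  intros Hr Ht Hm HL Hclose.
  assert (HL0 : 0 <= L)
    by (eapply Rle_trans; [apply Rabs_pos | apply (HL (gamma a 0) 0)]; specialize (Hm 0); lra).
  eapply Rle_trans.
  - apply gap_growth with (L := L); auto; [lra |].
    intros r' Hr'. rewrite gap_rate_nonneg by lra.
    apply (slope_bound _ _ _ t m M); try lra; auto; apply Hm; lra.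
  - rewrite !Hflow0. apply Rmult_le_compat_l; [apply Rabs_pos |].
    apply exp_le_compat. nra.
Qed.

(* By
   continuous induction: the bound at times < s keeps the gap below 1/2 up
   to s, hence below 1 a little beyond s, where gap_bound_while_close applies. *)
Lemma gap_estimate (a b t m M L : R) : 0 <= t < T ->
  (forall s, 0 <= s <= t -> m <= gamma a s <= M) ->
  (forall x s, m - 1 <= x <= M + 1 -> 0 <= s <= t -> Rabs (ux x s) <= L) ->
  Rabs (b - a) * exp (L * t) < 1 / 2 ->
  forall s, 0 <= s <= t -> Rabs (gamma b s - gamma a s) <= Rabs (b - a) * exp (L * t).
Proof.
  intros Ht Hm HL Hb.
  set (De := fun r => extend0 (gamma b) r - extend0 (gamma a) r).
  assert (HDe : forall r, r < T -> continuity_pt De r)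
    by (intros r Hr; apply continuity_pt_minus; apply extend0_continuous; auto).
  assert (HDe_nonneg : forall r, 0 <= r -> De r = gamma b r - gamma a r)
    by (intros; unfold De; rewrite !extend0_nonneg; auto).
  apply (continuous_induction 0 t); [lra |].
  intros s Hs IH.
  assert (Hs1 : Rabs (De s) <= 1 / 2).
  { destruct (Req_dec s 0) as [-> |].
    - rewrite HDe_nonneg, !Hflow0 by lra. pose proof (Rabs_pos (b - a)).
      assert (1 <= exp (L * t)); [| nra].
      rewrite <- exp_0. apply exp_le_compat.
      assert (0 <= Rabs (ux (gamma a 0) 0)) by apply Rabs_pos.
      specialize (HL (gamma a 0) 0). specialize (Hm 0). nra.
    - apply (le_of_le_on_left (fun r => Rabs (De r)) s s); [lra | |].
      + apply (continuity_pt_comp De Rabs); [apply HDe; lra | apply Rcontinuity_abs].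
      + intros r Hr. rewrite HDe_nonneg by lra. specialize (IH r ltac:(lra)). lra. }
  destruct (HDe s ltac:(lra) (1 / 4) ltac:(lra)) as [d1 [Hd1 H1]].
  exists d1. split; auto. intros r Hr Hrt.
  apply (gap_bound_while_close a b t m M); try lra; auto.
  intros r' Hr'. destruct (Rlt_or_le r' s); [specialize (IH r' ltac:(lra)); lra |].
  assert (Hnear : Rabs (De r' - De s) < 1 / 4).
  { destruct (Req_dec r' s) as [-> |]; [rewrite Rminus_diag, Rabs_R0; lra |].
    apply H1. split; [split; [exact I | auto] |]. simpl; unfold R_dist. rewrite Rabs_right; lra. }
  rewrite <- HDe_nonneg by lra.
  revert Hs1 Hnear. unfold Rabs; repeat destruct Rcase_abs; lra.
Qed.

Lemma gap_rate_integral_close (a b t m M L e du : R) : 0 <= t < T ->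
  (forall s, 0 <= s <= t -> m <= gamma a s <= M) ->
  (forall x s, m - 1 <= x <= M + 1 -> 0 <= s <= t -> Rabs (ux x s) <= L) ->
  (forall x y x' y', m - 1 <= x <= M + 1 -> 0 <= y <= t -> m - 1 <= x' <= M + 1 ->
     0 <= y' <= t -> Rabs (x' - x) < du -> Rabs (y' - y) < du -> Rabs (ux x' y' - ux x y) < e) ->
  Rabs (b - a) * exp (L * t) < 1 / 2 -> Rabs (b - a) * exp (L * t) < du ->
  Rabs (RInt (gap_rate (gamma b) (gamma a)) 0 t - RInt (gap_rate (gamma a) (gamma a)) 0 t)
    <= t * e.
Proof.
  intros Ht Hm HL Hu Hb1 Hb2.
  assert (Hgap := gap_estimate a b t m M L Ht Hm HL Hb1).
  assert (Hcq : forall y, trajectory y -> forall z, Rmin 0 t <= z <= Rmax 0 t ->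
                  continuity_pt (gap_rate y (gamma a)) z)
    by (intros y Hy z Hz; apply gap_rate_continuous; auto; revert Hz; apply Rmax_case; lra).
  rewrite <- RInt_minus_R by (apply ex_RInt_of_continuity, Hcq, Hflow).
  apply (primitive_bound _ (-1) T); try lra.
  - intros x Hx. apply continuity_pt_minus; apply gap_rate_continuous; auto; lra.
  - intros s Hs. rewrite !gap_rate_nonneg, slope_diag by lra.
    destruct (slope_mvt (gamma b s) (gamma a s) s) as [z [Hz ->]]; [lra |].
    specialize (Hgap s Hs). specialize (Hm s Hs). apply Rabs_segment in Hz.
    assert (Hz' := proj1 (Rabs_le_between _ _) Hz).
    left. apply Hu; try lra. rewrite Rminus_diag, Rabs_R0; lra.
Qed.

Lemma flow_derivative (a t : R) : 0 <= t < T ->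
  derivable_pt_lim (fun b => gamma b t) a (exp (RInt (gap_rate (gamma a) (gamma a)) 0 t)).
Proof.
  intros Ht.
  destruct (trajectory_bounds a t Ht) as [m [M [L [Hm HL]]]].
  assert (Hbox : forall x y, m - 1 <= x <= M + 1 -> 0 <= y <= t -> continuity_2d_pt ux x y)
    by (intros x y _ Hy; apply cont2_at_continuity_2d, Hcont_ux; lra).
  intros eps Heps.
  set (I0 := RInt (gap_rate (gamma a) (gamma a)) 0 t).
  destruct (derivable_continuous_pt exp I0 (derivable_pt_exp I0) eps Heps) as [e [He He2]].
  assert (He' : 0 < e / (t + 1)) by (apply Rdiv_lt_0_compat; lra).
  destruct (uniform_continuity_2d ux (m - 1) (M + 1) 0 t Hbox (mkposreal _ He'))
    as [[du Hdu] Hu]. simpl in Hu.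
  set (E := exp (L * t)). assert (HE : 0 < E) by apply exp_pos.
  assert (Hdh : 0 < Rmin (1 / (2 * E)) (du / E))
    by (apply Rmin_case; apply Rdiv_lt_0_compat; lra).
  exists (mkposreal _ Hdh). intros h Hh0 Hh. simpl in Hh.
  assert (Hscale : forall c, Rabs h < c / E -> Rabs (a + h - a) * E < c).
  { intros c Hc. replace (a + h - a) with h by ring.
    apply (Rmult_lt_reg_r (/ E)); [apply Rinv_0_lt_compat; lra |].
    replace (Rabs h * E * / E) with (Rabs h) by (field; lra). auto. }
  assert (Hh1 : Rabs (a + h - a) * E < 1 / 2).
  { apply Hscale. replace (1 / 2 / E) with (1 / (2 * E)) by (field; lra).
    eapply Rlt_le_trans; [apply Hh | apply Rmin_l]. }
  assert (Hh2 : Rabs (a + h - a) * E < du)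
    by (apply Hscale; eapply Rlt_le_trans; [apply Hh | apply Rmin_r]).
  (* the difference quotient is exp Ib, with Ib within t e / (t + 1) < e of I0 *)
  set (Ib := RInt (gap_rate (gamma (a + h)) (gamma a)) 0 t).
  assert (Hdiff : gamma (a + h) t - gamma a t = h * exp Ib).
  { unfold Ib. rewrite (trajectory_gap _ _ (Hflow _) (Hflow _) t Ht), !Hflow0. f_equal; ring. }
  replace ((gamma (a + h) t - gamma a t) / h - exp I0) with (exp Ib - exp I0)
    by (rewrite Hdiff; field; auto).
  assert (HI := gap_rate_integral_close a (a + h) t m M L (e / (t + 1)) du Ht Hm HL Hu Hh1 Hh2).
  fold Ib I0 in HI.
  assert (Hlt : t * (e / (t + 1)) < e)
    by (apply (Rmult_lt_reg_r (t + 1)); [lra | field_simplify; lra]).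
  destruct (Req_dec Ib I0) as [-> | Hne]; [rewrite Rminus_diag, Rabs_R0; auto |].
  apply He2. split; [split; [exact I | auto] |]. simpl. unfold R_dist. lra.
Qed.

Definition bc_periodic : Prop := forall x t, 0 <= t < T -> u (x + 1) t = u x t.
Definition bc_dirichlet : Prop := forall t, 0 <= t < T -> u 0 t = 0 /\ u 1 t = 0.

Section Periodic.
Hypothesis Hper : bc_periodic.

Lemma periodic_flow_ends (t : R) : 0 <= t < T -> gamma 1 t = gamma 0 t + 1.
Proof.
  apply (trajectory_unique (gamma 1) (fun s => gamma 0 s + 1)); [auto | | rewrite !Hflow0; ring].
  destruct (Hflow 0) as [Hd Hr]. split.
  - intros s Hs. apply derivable_pt_lim_eq with (u (gamma 0 s) s + 0);
      [apply derivable_pt_lim_plus; [auto | apply derivable_pt_lim_const] |].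
    rewrite Hper by lra. ring.
  - intros eps Heps. destruct (Hr eps Heps) as [d [Hd0 H]]. exists d. split; auto.
    intros s Hs. replace (gamma 0 s + 1 - (gamma 0 0 + 1)) with (gamma 0 s - gamma 0 0) by ring.
    auto.
Qed.

Lemma periodic_ux (x t : R) : 0 <= t < T -> ux (x + 1) t = ux x t.
Proof.
  intros Ht. apply (periodic_derivative (fun y => u y t) _ _ x); [intros; apply Hper; auto | |];
    apply Hux; unfold strip; lra.
Qed.

Lemma periodic_uxx (x t : R) : 0 <= t < T -> uxx (x + 1) t = uxx x t.
Proof.
  intros Ht. apply (periodic_derivative (fun y => ux y t) _ _ x);
    [intros; apply periodic_ux; auto | |];
    apply Huxx; unfold strip; lra.
Qed.

Lemma periodic_uxt (x t : R) : 0 < t < T -> uxt (x + 1) t = uxt x t.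
Proof.
  intros Ht. eapply uniqueness_limite; [apply Huxt; unfold strip; lra |].
  apply (derivable_pt_lim_ext_loc (fun s => ux x s) _ t (Rmin t (T - t)));
    [apply Rmin_case; lra | | apply Huxt; unfold strip; lra].
  intros y Hy. assert (Rmin t (T - t) <= t) by apply Rmin_l.
  assert (Rmin t (T - t) <= T - t) by apply Rmin_r.
  apply Rabs_def2 in Hy. rewrite periodic_ux; auto. lra.
Qed.

Lemma periodic_pde_everywhere (E : R -> R) :
  (forall x t, 0 <= x <= 1 -> 0 < t < T ->
     uxt x t + u x t * uxx x t - (ux x t) ^ 2 = E t) ->
  forall x t, 0 < t < T -> uxt x t + u x t * uxx x t - (ux x t) ^ 2 = E t.
Proof.
  intros Hpde x t Ht.
  destruct (periodic_reduce (fun x => uxt x t + u x t * uxx x t - (ux x t) ^ 2)) with (x := x)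
    as [x0 [Hx0 ->]]; [| apply Hpde; auto].
  intros y. rewrite periodic_ux, periodic_uxx, periodic_uxt, Hper by lra. auto.
Qed.

End Periodic.

(* Dirichlet case: the walls x = 0 and x = 1 are trajectories, so the flow
   keeps [0, 1] invariant. *)
Section Dirichlet.
Hypothesis Hdir : bc_dirichlet.

Lemma dirichlet_wall (c : R) : c = 0 \/ c = 1 -> forall t, 0 <= t < T -> gamma c t = c.
Proof.
  intros Hc. apply (trajectory_unique (gamma c) (fun _ => c)); [auto | | apply Hflow0]. split.
  - intros s Hs. apply derivable_pt_lim_eq with 0; [apply derivable_pt_lim_const |].
    destruct (Hdir s ltac:(lra)). destruct Hc; subst; auto.
  - intros eps Heps. exists 1. split; [lra |]. intros. rewrite Rminus_diag, Rabs_R0; auto.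
Qed.

Lemma dirichlet_invariant (a t : R) : 0 <= a <= 1 -> 0 <= t < T -> 0 <= gamma a t <= 1.
Proof.
  intros Ha Ht.
  assert (Hlow : gamma 0 t <= gamma a t)
    by (apply trajectory_monotone; auto; rewrite !Hflow0; lra).
  assert (Hhigh : gamma a t <= gamma 1 t)
    by (apply trajectory_monotone; auto; rewrite !Hflow0; lra).
  rewrite (dirichlet_wall 0 (or_introl eq_refl) t Ht) in Hlow.
  rewrite (dirichlet_wall 1 (or_intror eq_refl) t Ht) in Hhigh. lra.
Qed.

End Dirichlet.

Lemma boundary_consequences (E : R -> R) : bc_periodic \/ bc_dirichlet ->
  (forall x t, 0 <= x <= 1 -> 0 < t < T ->
     uxt x t + u x t * uxx x t - (ux x t) ^ 2 = E t) ->
  (forall a t, 0 <= a <= 1 -> 0 < t < T ->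
     uxt (gamma a t) t + u (gamma a t) t * uxx (gamma a t) t - (ux (gamma a t) t) ^ 2 = E t) /\
  (forall t, 0 <= t < T -> gamma 1 t - gamma 0 t = 1 /\ u (gamma 1 t) t = u (gamma 0 t) t) /\
  u 1 0 = u 0 0.
Proof.
  intros [Hper | Hdir] Hpde.
  - split; [intros; apply periodic_pde_everywhere; auto |]. split.
    + intros t Ht. rewrite periodic_flow_ends, Hper by auto. split; ring.
    + rewrite <- (Rplus_0_l 1) at 1. apply Hper. lra.
  - split; [intros; apply Hpde; [apply dirichlet_invariant |]; auto; lra |]. split.
    + intros t Ht. rewrite (dirichlet_wall Hdir 0 (or_introl eq_refl) t Ht),
                           (dirichlet_wall Hdir 1 (or_intror eq_refl) t Ht).
      destruct (Hdir t Ht) as [-> ->]. split; ring.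
    + destruct (Hdir 0 ltac:(lra)) as [-> ->]. auto.
Qed.

Section Jacobian.
(* Along each trajectory issued from [0, 1] the equation reads
   uxt + u uxx - ux^2 = I(t) with a coefficient I independent of the
   trajectory (I = -2 \int_0^1 ux^2 for the problem at hand). *)
Variable I : R -> R.
Hypothesis Hpde : forall a t, 0 <= a <= 1 -> 0 < t < T ->
  uxt (gamma a t) t + u (gamma a t) t * uxx (gamma a t) t - (ux (gamma a t) t) ^ 2 = I t.

(* ux along the trajectory gamma a (extended to negative times). *)
Definition rate (a : R) : R -> R := gap_rate (gamma a) (gamma a).

(* The inverse Jacobian 1 / gamma_a = exp (- \int_0^s ux (gamma a r) r dr)
   and its time derivative. *)
Definition jacinv (a s : R) : R := exp (- RInt (rate a) 0 s).
Definition jacinv_dot (a s : R) : R := - rate a s * jacinv a s.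

Lemma rate_nonneg (a s : R) : 0 <= s -> rate a s = ux (gamma a s) s.
Proof. intros; unfold rate; rewrite gap_rate_nonneg, slope_diag; auto. Qed.

Lemma rate_continuous (a s : R) : s < T -> continuity_pt (rate a) s.
Proof. intros; apply gap_rate_continuous; auto. Qed.

Lemma jacinv_pos (a s : R) : 0 < jacinv a s.
Proof. apply exp_pos. Qed.

Lemma jacinv_0 (a : R) : jacinv a 0 = 1.
Proof. unfold jacinv. rewrite RInt_point_R, Ropp_0, exp_0; auto. Qed.

Lemma jacinv_dot_0 (a : R) : jacinv_dot a 0 = - ux a 0.
Proof. unfold jacinv_dot. rewrite jacinv_0, rate_nonneg, Hflow0 by lra. ring. Qed.

Lemma jacinv_derivative (a s : R) : -1 < s < T ->
  derivable_pt_lim (jacinv a) s (jacinv_dot a s).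
Proof.
  intros Hs. unfold jacinv_dot, jacinv.
  apply derivable_pt_lim_eq with (exp (- RInt (rate a) 0 s) * (- rate a s)); [| ring].
  apply (derivable_pt_lim_comp (fun s => - RInt (rate a) 0 s) exp); [| apply derivable_pt_lim_exp].
  apply (derivable_pt_lim_opp (fun s => RInt (rate a) 0 s)).
  apply (primitive_derivative _ (-1) T); try lra. intros; apply rate_continuous; lra.
Qed.

Lemma jacinv_continuous (a s : R) : -1 < s < T -> continuity_pt (jacinv a) s.
Proof. intros. apply derivable_continuous_pt. eexists. apply jacinv_derivative; auto. Qed.

Lemma jacinv_dot_continuous (a s : R) : -1 < s < T -> continuity_pt (jacinv_dot a) s.
Proof.
  intros. unfold jacinv_dot. apply (continuity_pt_mult (fun s => - rate a s) (jacinv a)).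
  - apply (continuity_pt_opp (rate a)). apply rate_continuous; lra.
  - apply jacinv_continuous; auto.
Qed.

Lemma rate_derivative (a s : R) : 0 < s < T ->
  derivable_pt_lim (rate a) s (uxx (gamma a s) s * u (gamma a s) s + uxt (gamma a s) s).
Proof.
  intros Hs.
  apply (derivable_pt_lim_ext_loc (fun t => ux (gamma a t) t) _ s s); [lra | |].
  { intros y Hy. apply Rabs_def2 in Hy. rewrite rate_nonneg; auto; lra. }
  apply derivable_pt_lim_eq with (uxx (gamma a s) s * u (gamma a s) s + uxt (gamma a s) s * 1);
    [| ring].
  apply (derivable_pt_lim_comp_2d ux (gamma a) (fun t => t));
    [| apply (proj1 (Hflow a)); auto | apply derivable_pt_lim_id].
  set (r := Rmin (s + delta) (T - s)).
  assert (Hr : 0 < r) by (unfold r; apply Rmin_case; lra).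
  assert (r <= s + delta) by apply Rmin_l. assert (r <= T - s) by apply Rmin_r.
  apply (differentiable_of_continuous_partials ux uxx uxt (gamma a s) s r Hr);
    [| | apply Hcont_uxx | apply Hcont_uxt]; try lra;
    intros x t _ Ht; apply Rabs_def2 in Ht; [apply Huxx | apply Huxt]; unfold strip; lra.
Qed.

(* The key identity: the inverse Jacobian solves the linear equation
   jacinv'' = - I jacinv (the Riccati equation for ux, linearised). *)
Lemma jacinv_dot_derivative (a s : R) : 0 <= a <= 1 -> 0 < s < T ->
  derivable_pt_lim (jacinv_dot a) s (- I s * jacinv a s).
Proof.
  intros Ha Hs. unfold jacinv_dot.
  apply derivable_pt_lim_eq with
    (- (uxx (gamma a s) s * u (gamma a s) s + uxt (gamma a s) s) * jacinv a s +
     (- rate a s) * jacinv_dot a s).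
  - apply (derivable_pt_lim_mult (fun s => - rate a s) (jacinv a)).
    + apply (derivable_pt_lim_opp (rate a)). apply rate_derivative; auto.
    + apply jacinv_derivative; lra.
  - rewrite <- (Hpde a s Ha Hs). unfold jacinv_dot. rewrite rate_nonneg by lra. ring.
Qed.

Lemma coefficient_bound (t1 : R) : 0 <= t1 < T ->
  exists C, forall s, 0 < s < t1 -> Rabs (I s) <= C.
Proof.
  intros Ht1.
  set (X := extend0 (gamma 0)). set (S := Rmax 0).
  set (F := fun s => uxt (X s) (S s) + u (X s) (S s) * uxx (X s) (S s) - (ux (X s) (S s)) ^ 2).
  assert (HA : forall f, (forall x t, - delta < t < T -> cont2_at f x t) ->
                 forall s, 0 <= s <= t1 -> continuity_pt (fun s => f (X s) (S s)) s).
  { intros f Hf s Hs. apply continuity_pt_comp2.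
    - apply Hf. unfold S. split; [apply Rlt_le_trans with 0; [lra | apply Rmax_l] |].
      apply Rmax_case; lra.
    - apply extend0_continuous; auto. lra.
    - apply Rmax0_continuous. }
  assert (Hc : forall s, 0 <= s <= t1 -> continuity_pt (fun s => Rabs (F s)) s).
  { intros s Hs. apply (continuity_pt_comp F Rabs); [| apply Rcontinuity_abs].
    apply continuity_pt_minus; [apply continuity_pt_plus; [| apply continuity_pt_mult] |].
    1-3: apply HA; auto.
    apply (continuity_pt_comp (fun s => ux (X s) (S s)) (fun x => x ^ 2));
      [apply HA; auto | apply derivable_continuous_pt, derivable_pt_pow]. }
  destruct (continuity_ab_maj _ 0 t1 (proj1 Ht1) Hc) as [c [Hc1 _]].
  exists (Rabs (F c)). intros s Hs.
  rewrite <- (Hpde 0 s) by lra.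
  specialize (Hc1 s ltac:(lra)). unfold F, X, S, extend0 in Hc1.
  rewrite Rmax_right in Hc1 by lra. auto.
Qed.

(* Fix a0 in [0, 1] with u0'(a0) = 0 and let
   psi t = \int_0^t jacinv a0 ^ -2. Then every inverse Jacobian is
   jacinv a t = jacinv a0 t * (1 - psi t * u0'(a)): both sides solve
   D'' = - I D with the same Cauchy data (1, - u0'(a)). *)
Section CriticalPoint.
Variable a0 : R.
Hypothesis Ha0 : 0 <= a0 <= 1.
Hypothesis Hcrit : ux a0 0 = 0.

Definition psi (t : R) : R := RInt (fun s => / jacinv a0 s ^ 2) 0 t.

Lemma psi_0 : psi 0 = 0.
Proof. apply RInt_point_R. Qed.

Lemma psi_derivative (t : R) : -1 < t < T -> derivable_pt_lim psi t (/ jacinv a0 t ^ 2).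
Proof.
  intros Ht. apply (primitive_derivative (fun s => / jacinv a0 s ^ 2) (-1) T); try lra.
  intros x Hx. apply (continuity_pt_inv (fun s => jacinv a0 s ^ 2));
    [| apply pow_nonzero, Rgt_not_eq, jacinv_pos].
  apply (continuity_pt_comp (jacinv a0) (fun x => x ^ 2));
    [apply jacinv_continuous; auto | apply derivable_continuous_pt, derivable_pt_pow].
Qed.

Lemma psi_continuous (t : R) : -1 < t < T -> continuity_pt psi t.
Proof. intros. apply derivable_continuous_pt. eexists. apply psi_derivative; auto. Qed.

Definition reduced (a s : R) : R := jacinv a0 s * (1 - psi s * ux a 0).
Definition reduced_dot (a s : R) : R :=
  jacinv_dot a0 s * (1 - psi s * ux a 0) - ux a 0 / jacinv a0 s.

Lemma reduced_derivative (a s : R) : -1 < s < T ->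
  derivable_pt_lim (reduced a) s (reduced_dot a s).
Proof.
  intros Hs. unfold reduced, reduced_dot. pose proof (jacinv_pos a0 s).
  apply derivable_pt_lim_eq with
    (jacinv_dot a0 s * (1 - psi s * ux a 0) + jacinv a0 s * (0 - / jacinv a0 s ^ 2 * ux a 0)).
  - apply (derivable_pt_lim_mult (jacinv a0) (fun s => 1 - psi s * ux a 0));
      [apply jacinv_derivative; auto |].
    apply (derivable_pt_lim_minus (fun _ => 1) (fun s => psi s * ux a 0));
      [apply derivable_pt_lim_const |].
    apply (derivable_pt_lim_scal_right psi), psi_derivative; auto.
  - field. lra.
Qed.

Lemma reduced_dot_continuous (a s : R) : -1 < s < T -> continuity_pt (reduced_dot a) s.
Proof.
  intros Hs. unfold reduced_dot.
  apply continuity_pt_minus.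
  - apply (continuity_pt_mult (jacinv_dot a0) (fun s => 1 - psi s * ux a 0));
      [apply jacinv_dot_continuous; auto |].
    apply continuity_pt_minus; [apply continuity_pt_const; intros ? ?; auto |].
    apply (continuity_pt_mult psi (fun _ => ux a 0));
      [apply psi_continuous; auto | apply continuity_pt_const; intros ? ?; auto].
  - apply continuity_pt_div; [apply continuity_pt_const; intros ? ?; auto
                            | apply jacinv_continuous; auto | apply Rgt_not_eq, jacinv_pos].
Qed.

Lemma reduced_dot_derivative (a s : R) : 0 < s < T ->
  derivable_pt_lim (reduced_dot a) s (- I s * reduced a s).
Proof.
  intros Hs. unfold reduced_dot, reduced. pose proof (jacinv_pos a0 s).
  apply derivable_pt_lim_eq with
    ((- I s * jacinv a0 s) * (1 - psi s * ux a 0)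
     + jacinv_dot a0 s * (0 - / jacinv a0 s ^ 2 * ux a 0)
     - (0 * jacinv a0 s - jacinv_dot a0 s * ux a 0) / (jacinv a0 s)²).
  - apply (derivable_pt_lim_minus (fun s => jacinv_dot a0 s * (1 - psi s * ux a 0))
                                   (fun s => ux a 0 / jacinv a0 s)).
    + apply (derivable_pt_lim_mult (jacinv_dot a0) (fun s => 1 - psi s * ux a 0));
        [apply jacinv_dot_derivative; auto |].
      apply (derivable_pt_lim_minus (fun _ => 1) (fun s => psi s * ux a 0));
        [apply derivable_pt_lim_const |].
      apply (derivable_pt_lim_scal_right psi), psi_derivative; lra.
    + apply (derivable_pt_lim_div (fun _ => ux a 0) (jacinv a0));
        [apply derivable_pt_lim_const | apply jacinv_derivative; lra | apply Rgt_not_eq; auto].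
  - unfold Rsqr. field. lra.
Qed.

Lemma jacinv_reduction (a t : R) : 0 <= a <= 1 -> 0 <= t < T ->
  jacinv a t = jacinv a0 t * (1 - psi t * ux a 0).
Proof.
  intros Ha Ht.
  destruct (coefficient_bound t Ht) as [C HC].
  enough (jacinv a t - reduced a t = 0) by (unfold reduced in *; lra).
  apply (linear_ode_zero_data (fun s => jacinv a s - reduced a s)
           (fun s => jacinv_dot a s - reduced_dot a s) I t C); try lra; auto.
  - intros s Hs. apply derivable_pt_lim_minus;
      [apply jacinv_derivative | apply reduced_derivative]; lra.
  - intros s Hs. apply continuity_pt_minus;
      [apply jacinv_dot_continuous | apply reduced_dot_continuous]; lra.
  - intros s Hs. apply derivable_pt_lim_eq with (- I s * jacinv a s - - I s * reduced a s);
      [| ring].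
    apply derivable_pt_lim_minus; [apply jacinv_dot_derivative | apply reduced_dot_derivative];
      auto; lra.
  - cbv beta. unfold reduced. rewrite !jacinv_0, psi_0. ring.
  - cbv beta. unfold reduced_dot. rewrite !jacinv_dot_0, jacinv_0, psi_0, Hcrit. field.
Qed.

Lemma flow_derivative_jacinv (a t : R) : 0 <= t < T ->
  derivable_pt_lim (fun b => gamma b t) a (/ jacinv a t).
Proof.
  intros Ht. apply derivable_pt_lim_eq with (exp (RInt (rate a) 0 t));
    [apply flow_derivative; auto |].
  unfold jacinv. rewrite exp_Ropp, Rinv_inv. auto.
Qed.

(* J = 1 - psi u0' stays positive, being jacinv a / jacinv a0. *)
Lemma J_positive (a t : R) : 0 <= a <= 1 -> 0 <= t < T -> 0 < 1 - psi t * ux a 0.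
Proof.
  intros Ha Ht. pose proof (jacinv_pos a t) as H1. pose proof (jacinv_pos a0 t).
  rewrite jacinv_reduction in H1 by auto. nra.
Qed.

Lemma psi_positive (t : R) : 0 < t < T -> 0 < psi t.
Proof.
  intros Ht. unfold psi.
  apply Rle_lt_trans with (0 * (t - 0)); [lra |].
  rewrite <- RInt_const_R. apply RInt_lt; try lra.
  - intros x Hx. apply continuous_of_continuity_pt.
    apply (continuity_pt_inv (fun s => jacinv a0 s ^ 2)); [| apply pow_nonzero, Rgt_not_eq, jacinv_pos].
    apply (continuity_pt_comp (jacinv a0) (fun x => x ^ 2));
      [apply jacinv_continuous; lra | apply derivable_continuous_pt, derivable_pt_pow].
  - intros x Hx. apply continuous_const.
  - intros x Hx. apply Rinv_0_lt_compat, pow_lt, jacinv_pos.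
Qed.

(* The boundary conditions enter only through the two end trajectories:
   gamma 1 - gamma 0 = 1 and u (gamma 1) = u (gamma 0). *)
Hypothesis Hends : forall t, 0 <= t < T ->
  gamma 1 t - gamma 0 t = 1 /\ u (gamma 1 t) t = u (gamma 0 t) t.

(* Conservation of length: \int_0^1 gamma_a = 1 gives Kbar_0(psi) = jacinv a0. *)
Lemma mass_identity (t : R) : 0 <= t < T -> kbar 0 (psi t) = jacinv a0 t.
Proof.
  intros Ht. pose proof (jacinv_pos a0 t).
  assert (Hint : RInt (fun a => / jacinv a0 t * / (1 - psi t * ux a 0) ^ (0 + 1)) 0 1 = 1 :> R).
  { rewrite (RInt_derivative (fun b => gamma b t)); [apply Hends; auto | lra | |].
    - intros x Hx. apply derivable_pt_lim_eq with (/ jacinv x t);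
        [apply flow_derivative_jacinv; auto |].
      rewrite jacinv_reduction by auto. pose proof (J_positive x t Hx Ht).
      simpl. field. lra.
    - intros x Hx. apply continuity_pt_scal, Jpow_inv_continuous, Rgt_not_eq, J_positive; auto. }
  rewrite RInt_scal_R in Hint by (apply ex_RInt_Jpow_inv; intros; apply J_positive; auto).
  unfold kbar. apply (Rmult_eq_reg_l (/ jacinv a0 t)); [rewrite Hint; field; lra |].
  apply Rinv_neq_0_compat; lra.
Qed.

(* jacinv_dot also reduces: it is the time derivative of the reduced form. *)
Lemma jacinv_dot_reduction (a t : R) : 0 <= a <= 1 -> 0 < t < T ->
  jacinv_dot a t = reduced_dot a t.
Proof.
  intros Ha Ht. eapply uniqueness_limite; [apply jacinv_derivative; lra |].
  apply (derivable_pt_lim_ext_loc (reduced a) _ t (Rmin t (T - t)));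
    [apply Rmin_case; lra | | apply reduced_derivative; lra].
  intros y Hy. assert (Rmin t (T - t) <= t) by apply Rmin_l.
  assert (Rmin t (T - t) <= T - t) by apply Rmin_r.
  apply Rabs_def2 in Hy. symmetry. apply jacinv_reduction; auto; lra.
Qed.

(* ux along the flow, expressed through u0'(a) and the data of a0:
   ux (gamma a t) t = - jacinv_dot / jacinv, both in reduced form. *)
Lemma rate_reduced (a t : R) : 0 <= a <= 1 -> 0 < t < T ->
  ux (gamma a t) t = - reduced_dot a t / reduced a t.
Proof.
  intros Ha Ht. pose proof (jacinv_pos a t).
  rewrite <- rate_nonneg, <- jacinv_dot_reduction by (auto; lra).
  unfold reduced. rewrite <- jacinv_reduction by (auto; lra).
  unfold jacinv_dot. field. lra.
Qed.

(* Conservation of the end values of u: \int_0^1 d/da u (gamma a t) t = 0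
   determines jacinv_dot a0 in terms of Kbar_0 and Kbar_1. *)
Lemma momentum_identity (t : R) : 0 < t < T ->
  jacinv_dot a0 t = (kbar 1 (psi t) - jacinv a0 t) / (jacinv a0 t ^ 2 * psi t).
Proof.
  intros Ht.
  set (H := jacinv a0 t). set (H1 := jacinv_dot a0 t). set (p := psi t).
  assert (HH : 0 < H) by apply jacinv_pos. assert (Hp : 0 < p) by (apply psi_positive; auto).
  set (A := - H1 / H ^ 2 - / H ^ 3 / p). set (B := / H ^ 3 / p).
  set (J1 := fun a => / (1 - p * ux a 0) ^ (0 + 1)).
  set (J2 := fun a => / (1 - p * ux a 0) ^ (1 + 1)).
  assert (HJ : forall a, 0 <= a <= 1 -> 0 < 1 - p * ux a 0) by (intros; apply J_positive; lra).
  (* d/da u (gamma a t) t = A / J + B / J^2 *)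
  assert (Hint : RInt (fun a => A * J1 a + B * J2 a) 0 1 = 0 :> R).
  { rewrite (RInt_derivative (fun b => u (gamma b t) t)); [| lra | |].
    - destruct (Hends t ltac:(lra)) as [_ ->]. ring.
    - intros x Hx. apply derivable_pt_lim_eq with (ux (gamma x t) t * / jacinv x t).
      + apply (derivable_pt_lim_comp (fun b => gamma b t) (fun y => u y t));
          [apply flow_derivative_jacinv; lra | apply Hux; unfold strip; lra].
      + rewrite rate_reduced, jacinv_reduction by (auto; lra).
        specialize (HJ x Hx). unfold reduced, reduced_dot, A, B, J1, J2. fold H H1 p.
        simpl. field. lra.
    - intros x Hx. apply continuity_pt_plus; apply continuity_pt_scal;
        apply Jpow_inv_continuous, Rgt_not_eq, HJ; auto. }
  rewrite RInt_lincomb in Hint by (apply ex_RInt_Jpow_inv; auto).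
  replace (RInt J1 0 1) with H in Hint by (symmetry; apply mass_identity; lra).
  change (RInt J2 0 1) with (kbar 1 p) in Hint.
  replace H1 with ((kbar 1 p - H) / (H ^ 2 * p) - H * (A * H + B * kbar 1 p))
    by (unfold A, B; field; lra).
  rewrite Hint. ring.
Qed.

(* The formula of the theorem with psi in place of eta. *)
Lemma ux_along_flow (a t : R) : 0 <= a <= 1 -> 0 < t < T ->
  ux (gamma a t) t = / (psi t * kbar 0 (psi t) ^ 2) *
    (/ (1 - psi t * ux a 0) - kbar 1 (psi t) / kbar 0 (psi t)).
Proof.
  intros Ha Ht. rewrite rate_reduced, mass_identity by (auto; lra).
  unfold reduced, reduced_dot. rewrite momentum_identity by auto.
  pose proof (jacinv_pos a0 t). pose proof (psi_positive t Ht).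
  pose proof (J_positive a t Ha ltac:(lra)).
  field. lra.
Qed.

(* Identification of eta: eta solves eta' = Kbar_0(eta)^-2 as long as J > 0,
   and so does psi, by the mass identity. The right-hand side is locally
   Lipschitz on admissible parameters, so eta = psi by continuous induction. *)
Variable eta : R -> R.
Hypothesis Heta0 : eta 0 = 0.
Hypothesis Heta : forall t, 0 <= t < T ->
  derivable_pt_lim eta t (/ (Kbar 0 (fun a => ux a 0) eta t) ^ 2).

Lemma psi_equation (t : R) : 0 <= t < T -> derivable_pt_lim psi t (/ kbar 0 (psi t) ^ 2).
Proof. intros Ht. rewrite mass_identity by auto. apply psi_derivative; lra. Qed.

(* Local uniqueness: if eta and psi agree at s, they agree on [s, s + d).
   Near the admissible parameter psi s (with margin m) both stay admissible
   and the right-hand side is Lipschitz. *)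
Lemma eta_psi_agree_after (s : R) : 0 <= s < T -> eta s = psi s ->
  exists d, 0 < d /\ forall r', s <= r' < s + d -> r' < T -> eta r' = psi r'.
Proof.
  intros Hs Hes.
  destruct (admissible_open (psi s)) as [m [P [r [Hm [Hr [HP Hadm]]]]]];
    [intros; apply J_positive; auto; lra |].
  assert (HP0 : 0 <= P) by (eapply Rle_trans; [apply Rabs_pos | apply (HP 0); lra]).
  assert (Hbound : forall e, Rabs (e - psi s) <= r -> Rabs e <= Rabs (psi s) + r).
  { intros e He. replace e with (psi s + (e - psi s)) by ring.
    eapply Rle_trans; [apply Rabs_triang | lra]. }
  assert (Hce : continuity_pt eta s) by (apply derivable_continuous_pt; eexists; apply Heta; lra).
  destruct (Hce r Hr) as [d1 [Hd1 H1]].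
  destruct (psi_continuous s ltac:(lra) r Hr) as [d2 [Hd2 H2]].
  exists (Rmin d1 d2). split; [apply Rmin_case; lra |].
  intros r' Hr' Hr'T.
  assert (Rmin d1 d2 <= d1) by apply Rmin_l. assert (Rmin d1 d2 <= d2) by apply Rmin_r.
  assert (Hnear : forall x, s <= x <= r' ->
            Rabs (eta x - psi s) <= r /\ Rabs (psi x - psi s) <= r).
  { intros x Hx. destruct (Req_dec x s) as [-> |].
    - rewrite Hes, Rminus_diag, Rabs_R0. lra.
    - rewrite <- Hes at 1. split; left; [apply H1 | apply H2];
        (split; [split; [exact Logic.I | auto] | simpl; unfold R_dist; rewrite Rabs_right; lra]). }
  set (L := 2 / m * (1 + (Rabs (psi s) + r) * P) ^ 4 * (P / m ^ 2)).
  assert (HL : 0 <= L).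
  { pose proof (Rabs_pos (psi s)).
    apply Rmult_le_pos; [apply Rmult_le_pos |].
    - apply Rlt_le, Rdiv_lt_0_compat; lra.
    - apply pow_le; nra.
    - apply Rmult_le_pos; [lra | apply Rlt_le, Rinv_0_lt_compat, pow_lt; lra]. }
  apply (lipschitz_ode_uniqueness eta psi (fun x => / kbar 0 (eta x) ^ 2)
           (fun x => / kbar 0 (psi x) ^ 2) s r' L); auto; try lra.
  - intros x Hx. rewrite <- Kbar_kbar; [apply Heta; lra |].
    intros a Ha. destruct (Hnear x Hx) as [He _]. specialize (Hadm _ He a Ha). lra.
  - intros x Hx. apply psi_equation. lra.
  - intros x Hx. destruct (Hnear x ltac:(lra)) as [He Hp].
    apply (eta_rhs_lipschitz m P); try lra; auto.
Qed.

Lemma eta_eq_psi (t : R) : 0 <= t < T -> eta t = psi t.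
Proof.
  intros Ht. apply (continuous_induction 0 t (fun r => eta r = psi r)); [lra | | lra].
  intros s Hs IH.
  enough (Hes : eta s = psi s) by
    (destruct (eta_psi_agree_after s ltac:(lra) Hes) as [d [Hd Hagree]];
     exists d; split; auto; intros; apply Hagree; lra).
  destruct (Req_dec s 0) as [-> |]; [rewrite Heta0, psi_0; auto |].
  (* agreement on [0, s) passes to s by continuity *)
  assert (Habs : Rabs (eta s - psi s) <= 0).
  { apply (le_of_le_on_left (fun r => Rabs (eta r - psi r)) s s); [lra | |].
    - apply (continuity_pt_comp (fun r => eta r - psi r) Rabs); [| apply Rcontinuity_abs].
      apply continuity_pt_minus; [| apply psi_continuous; lra].
      apply derivable_continuous_pt; eexists; apply Heta; lra.
    - intros r Hr. rewrite IH, Rminus_diag, Rabs_R0 by lra. lra. }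
  pose proof (Rabs_pos (eta s - psi s)). apply Rabs_le_between in Habs. lra.
Qed.

Lemma lagrangian_formulas (alpha t : R) : 0 <= alpha <= 1 -> 0 <= t < T ->
  0 < J (fun a => ux a 0) eta alpha t /\
  derivable_pt_lim (fun a => gamma a t) alpha
    (K 0 (fun a => ux a 0) eta alpha t / Kbar 0 (fun a => ux a 0) eta t) /\
  (0 < t ->
   ux (gamma alpha t) t =
     / (eta t * (Kbar 0 (fun a => ux a 0) eta t) ^ 2) *
     (/ J (fun a => ux a 0) eta alpha t -
      Kbar 1 (fun a => ux a 0) eta t / Kbar 0 (fun a => ux a 0) eta t)).
Proof.
  intros Ha Ht.
  assert (Ee : eta t = psi t) by (apply eta_eq_psi; auto).
  assert (HJ : forall a, 0 <= a <= 1 -> 0 < 1 - eta t * ux a 0)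
    by (intros; rewrite Ee; apply J_positive; auto).
  unfold J. rewrite !Kbar_kbar, Ee by auto. rewrite Ee in HJ.
  split; [auto | split].
  - apply derivable_pt_lim_eq with (/ jacinv alpha t); [apply flow_derivative_jacinv; auto |].
    rewrite (jacinv_reduction alpha t), <- mass_identity by auto.
    unfold K, J. rewrite Ee. pose proof (HJ alpha Ha).
    assert (0 < kbar 0 (psi t)) by (rewrite mass_identity by auto; apply jacinv_pos).
    simpl. field. lra.
  - intros Ht0. apply ux_along_flow; auto; lra.
Qed.

End CriticalPoint.
End Jacobian.
End Lagrangian.

Theorem mainTheorem3
  (T delta : R) (u ux uxx uxt : R -> R -> R) (eta : R -> R) (gamma : R -> R -> R)
  (HT : 0 < T) (Hdelta : 0 < delta)
  (Hsmooth : smooth_on (strip delta T) u)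
  (Hux : is_dx_on (strip delta T) u ux)
  (Huxx : is_dx_on (strip delta T) ux uxx)
  (Huxt : is_dt_on (strip delta T) ux uxt)
  (Hbc : (forall x t, 0 <= t < T -> u (x + 1) t = u x t) \/
         (forall t, 0 <= t < T -> u 0 t = 0 /\ u 1 t = 0))
  (Hpde : forall x t, 0 <= x <= 1 -> 0 < t < T ->
     uxt x t + u x t * uxx x t - (ux x t) ^ 2
       = - 2 * Defs.RInt (fun y => (ux y t) ^ 2) 0 1)
  (Heta0 : eta 0 = 0)
  (Heta : forall t, 0 <= t < T ->
     derivable_pt_lim eta t (/ (Kbar 0 (fun a => ux a 0) eta t) ^ 2))
  (Hgamma0 : forall alpha, gamma alpha 0 = alpha)
  (Hgamma : forall alpha t, 0 < t < T ->
     derivable_pt_lim (fun s => gamma alpha s) t (u (gamma alpha t) t))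
  (Hgamma_rc : forall alpha eps, 0 < eps -> exists d, 0 < d /\
     forall s, 0 <= s < d -> Rabs (gamma alpha s - alpha) < eps) :
  forall alpha t, 0 <= alpha <= 1 -> 0 <= t < T ->
    0 < J (fun a => ux a 0) eta alpha t /\
    derivable_pt_lim (fun a => gamma a t) alpha
      (K 0 (fun a => ux a 0) eta alpha t / Kbar 0 (fun a => ux a 0) eta t) /\
    (0 < t ->
     ux (gamma alpha t) t =
       / (eta t * (Kbar 0 (fun a => ux a 0) eta t) ^ 2) *
       (/ J (fun a => ux a 0) eta alpha t -
        Kbar 1 (fun a => ux a 0) eta t / Kbar 0 (fun a => ux a 0) eta t)).
Proof.
  pose proof (smooth_regularity delta T u ux uxx uxt Hsmooth Hux Huxx Huxt) as Hreg.
  pose proof (fun x t Ht => proj1 (Hreg x t Ht)) as Hcont_u.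
  pose proof (fun x t Ht => proj1 (proj2 (Hreg x t Ht))) as Hcont_ux.
  pose proof (fun x t Ht => proj1 (proj2 (proj2 (Hreg x t Ht)))) as Hcont_uxx.
  pose proof (fun x t Ht => proj2 (proj2 (proj2 (Hreg x t Ht)))) as Hcont_uxt.
  assert (Hflow : forall a, trajectory T u (gamma a)).
  { intros a. split; [intros; apply Hgamma; auto |].
    intros eps Heps. rewrite Hgamma0. apply Hgamma_rc; auto. }
  destruct (boundary_consequences T delta u ux uxx uxt HT Hdelta Hcont_u Hcont_ux
              Hux Huxx Huxt gamma Hflow Hgamma0 _ Hbc Hpde) as [Hpde_flow [Hends Hu10]].
  (* u0(1) = u0(0) gives a critical point a0 of u0 *)
  destruct (mvt_open (fun x => u x 0) (fun x => ux x 0) 0 1) as [a0 [Ha0 Ea0]]; [lra | | |].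
  { intros c Hc. apply Hux. unfold strip; lra. }
  { intros c Hc. apply derivable_continuous_pt. exists (ux c 0). apply Hux. unfold strip; lra. }
  assert (Hcrit : ux a0 0 = 0) by (simpl in Ea0; lra).
  exact (lagrangian_formulas T delta u ux uxx uxt HT Hdelta Hcont_u Hcont_ux Hcont_uxx Hcont_uxt
           Hux Huxx Huxt gamma Hflow Hgamma0 _ Hpde_flow a0 ltac:(lra) Hcrit Hends
           eta Heta0 Heta).
Qed.
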